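(* If $z$ is a real number with $0<|z|\le 1/\alpha$, then \[ \sum_{k=1}^\infty\frac{F_{2k}\zeta(2k)z^{2k}}{k(2k+1)} = \frac{2\ln\alpha}{\sqrt5}-\frac{\beta\operatorname{Cl}_2(2\pi\alpha z)-\alpha\operatorname{Cl}_2(2\pi\beta z)}{2\sqrt5\,\pi z}, \] \[ \sum_{k=1}^\infty\frac{L_{2k}\zeta(2k)z^{2k}}{k(2k+1)} = -2+2\ln(2\pi z)-\frac{\beta\operatorname{Cl}_2(2\pi\alpha z)+\alpha\operatorname{Cl}_2(2\pi\beta z)}{2\pi z}. \]
   Context: $F_n$, $L_n$ are the Fibonacci and Lucas numbers ($F_0=0,F_1=1$, $L_0=2,L_1=1$, $w_n=w_{n-1}+w_{n-2}$); $\alpha=(1+\sqrt5)/2$, $\beta=(1-\sqrt5)/2$. $\zeta$ is the Riemann zeta function and $\operatorname{Cl}_2(x)=\sum_{k\ge1}\sin(kx)/k^2$ is the Clausen function. *)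

From Stdlib Require Import Reals.
From Coquelicot Require Import Coquelicot.
Open Scope R_scope.

Fixpoint fib (n : nat) : R :=
  match n with
  | O => 0
  | S O => 1
  | S ((S m) as p) => fib p + fib m
  end.

Fixpoint lucas (n : nat) : R :=
  match n with
  | O => 2
  | S O => 1
  | S ((S m) as p) => lucas p + lucas m
  end.

Definition alpha : R := (1 + sqrt 5) / 2.
Definition beta : R := (1 - sqrt 5) / 2.

Definition zeta (s : R) : R :=
  Series (fun n : nat => / Rpower (INR n + 1) s).

Definition Cl2 (x : R) : R :=
  Series (fun n : nat => sin (INR (S n) * x) / (INR (S n)) ^ 2).

From Stdlib Require Import Reals Lra Lia.
From Coquelicot Require Import Coquelicot.
Open Scope R_scope.

(* Let T(x) = sum_{k>=1} zeta(2k) x^(2k+1) / (k (2k+1)).  Differentiating twice and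
   interchanging the resulting nonnegative double series, T''(x) = sum_k 2 zeta(2k) x^(2k-1)
   = 1/x - pi cot(pi x), by the partial-fraction expansion of the cotangent (proved with
   Herglotz's trick).  Integrating twice from 0 with Cl2'(t) = -ln(2 sin(t/2)) on (0, 2 pi)
   (termwise differentiation, the derived series converging uniformly on compact subsets by
   a Dirichlet-kernel estimate) gives T(x) = x ln(2 pi x) - x + Cl2(2 pi x) / (2 pi) on
   (0, 1], the endpoint by continuity.  So sum_k zeta(2k) x^(2k) / (k (2k+1)) equals
   ln(2 pi |x|) - 1 + Cl2(2 pi x) / (2 pi x) for 0 < |x| <= 1.  As |z| <= 1/alpha gives
   |alpha z|, |beta z| <= 1, evaluating at alpha z and beta z and combining with Binet's
   formulas F_2k = (alpha^2k - beta^2k) / sqrt 5, L_2k = alpha^2k + beta^2k and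
   alpha beta = -1 yields both identities. *)

(** * Real series *)

Lemma sum_Sn_R (a : nat -> R) n : sum_n a (S n) = sum_n a n + a (S n).
Proof. exact (@sum_Sn R_AbelianMonoid a n). Qed.

(* [is_series_ext] states the pointwise equation in [NormedModule.sort], where [ring] and
   [field] do not apply. *)
Lemma is_series_ext_R (a b : nat -> R) (l : R) :
  (forall n, a n = b n) -> is_series a l -> is_series b l.
Proof. apply is_series_ext. Qed.

Lemma is_series_ext_eq_R (a b : nat -> R) (l l' : R) :
  (forall n, a n = b n) -> l = l' -> is_series a l -> is_series b l'.
Proof. intros Hab <-. apply is_series_ext, Hab. Qed.

Lemma Series_zero (a : nat -> R) : (forall n, a n = 0) -> Series a = 0.
Proof.
  intros Ha. rewrite (Series_ext a (fun _ => 0 * 0)) by (intros n; rewrite Ha; ring).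
  rewrite Series_scal_l. ring.
Qed.

Lemma sum_n_opp_R (a : nat -> R) n : sum_n (fun k => - a k) n = - sum_n a n.
Proof.
  induction n as [|n IH]; [now rewrite !sum_O|].
  rewrite !sum_Sn_R, IH. lra.
Qed.

Lemma sum_n_nonneg (a : nat -> R) n : (forall k, 0 <= a k) -> 0 <= sum_n a n.
Proof. intros Ha. rewrite sum_n_Reals. now apply cond_pos_sum. Qed.

Lemma sum_n_le_is_series (a : nat -> R) l n :
  (forall k, 0 <= a k) -> is_series a l -> sum_n a n <= l.
Proof.
  intros Ha Hl. rewrite sum_n_Reals. apply sum_incr; [|exact Ha].
  apply is_series_Reals, Hl.
Qed.

Lemma is_lim_seq_0_of_le_inv (u : nat -> R) C :
  (forall n, Rabs (u n) <= C / INR (S n)) -> is_lim_seq u 0.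
Proof.
  intros Hu.
  assert (HC : is_lim_seq (fun n => C / INR (S n)) 0).
  { replace (Finite 0) with (Rbar_mult C 0) by (simpl; f_equal; ring).
    apply is_lim_seq_scal_l, (is_lim_seq_incr_1 (fun n => / INR n)).
    replace (Finite 0) with (Rbar_inv p_infty) by reflexivity.
    apply is_lim_seq_inv; [apply is_lim_seq_INR | discriminate]. }
  apply (is_lim_seq_le_le (fun n => - (C / INR (S n))) u (fun n => C / INR (S n))).
  - intros n. apply Rabs_le_between, Hu.
  - replace (Finite 0) with (Rbar_opp 0) by (simpl; f_equal; ring).
    exact (proj1 (is_lim_seq_opp _ 0) HC).
  - exact HC.
Qed.

Lemma is_series_telescope (f : nat -> R) (l : R) :
  is_lim_seq f l -> is_series (fun n => f n - f (S n)) (f O - l).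
Proof.
  intros Hf.
  assert (Hsum : forall N, sum_n (fun n => f n - f (S n)) N = f O - f (S N)).
  { induction N as [|N IH]; [now rewrite sum_O|]. rewrite sum_Sn_R, IH. lra. }
  change (is_lim_seq (sum_n (fun n => f n - f (S n))) (f O - l)).
  apply (is_lim_seq_ext (fun N => f O - f (S N))); [intros N; now rewrite Hsum|].
  apply (is_lim_seq_minus' (fun _ => f O)); [apply is_lim_seq_const|].
  now apply (is_lim_seq_incr_1 f).
Qed.

Lemma is_lim_seq_inv_S : is_lim_seq (fun n => / INR (S n)) 0.
Proof.
  apply (is_lim_seq_0_of_le_inv _ 1). intros n.
  rewrite Rabs_pos_eq; [lra|]. apply Rlt_le, Rinv_0_lt_compat, lt_0_INR. lia.
Qed.

Lemma ex_series_inv_sq : ex_series (fun n => / INR (S n) ^ 2).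
Proof.
  apply (@ex_series_le R_AbsRing R_CompleteNormedModule _
           (fun n => 2 * (/ INR (S n) - / INR (S (S n))))).
  - intros n. change (norm (/ INR (S n) ^ 2)) with (Rabs (/ INR (S n) ^ 2)).
    rewrite (S_INR (S n)).
    assert (Hn : 1 <= INR (S n)) by (apply (le_INR 1); lia).
    revert Hn. generalize (INR (S n)). intros t Ht.
    rewrite Rabs_pos_eq by (apply Rlt_le, Rinv_0_lt_compat; nra).
    apply Rmult_le_reg_r with (t * t * (t + 1)); [nra|].
    field_simplify; lra.
  - exists (2 * (/ INR (S O) - 0)).
    apply (@is_series_scal_l R_AbsRing R_NormedModule 2).
    apply (is_series_telescope (fun n => / INR (S n))), is_lim_seq_inv_S.
Qed.

Lemma term_le_is_series (a : nat -> R) l n :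
  (forall k, 0 <= a k) -> is_series a l -> a n <= l.
Proof.
  intros Ha Hl. apply Rle_trans with (sum_n a n); [|now apply sum_n_le_is_series].
  destruct n as [|n]; [rewrite sum_O; lra|].
  rewrite sum_Sn_R. pose proof (sum_n_nonneg a n Ha). lra.
Qed.

Lemma is_lim_seq_sum_n (u : nat -> nat -> R) (l : nat -> R) K :
  (forall k, is_lim_seq (fun N => u k N) (l k)) ->
  is_lim_seq (fun N => sum_n (fun k => u k N) K) (sum_n l K).
Proof.
  intros Hu. induction K as [|K IH].
  - rewrite sum_O. apply (is_lim_seq_ext (u O)); [intros; now rewrite sum_O | apply Hu].
  - rewrite sum_Sn_R.
    apply (is_lim_seq_ext (fun N => sum_n (fun k => u k N) K + u (S K) N)).
    + intros N. now rewrite sum_Sn_R.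
    + now apply is_lim_seq_plus'.
Qed.

Lemma sum_n_Series_le (a : nat -> nat -> R) (r : nat -> R) B K :
  (forall k n, 0 <= a k n) -> (forall k, ex_series (fun n => a k n)) ->
  (forall n, is_series (fun k => a k n) (r n)) -> (forall N, sum_n r N <= B) ->
  sum_n (fun k => Series (fun n => a k n)) K <= B.
Proof.
  intros Ha Hex Hr HB.
  assert (Hlim : is_lim_seq (fun N => sum_n (fun k => sum_n (fun n => a k n) N) K)
                   (sum_n (fun k => Series (fun n => a k n)) K)).
  { apply is_lim_seq_sum_n. intros k. apply (Series_correct _ (Hex k)). }
  apply (is_lim_seq_le _ (fun _ => B) _ _) with (2 := Hlim) (3 := is_lim_seq_const B).
  intros N. rewrite sum_n_switch. apply Rle_trans with (sum_n r N); [|apply HB].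
  apply sum_n_m_le. intros n. apply sum_n_le_is_series; auto.
Qed.

Lemma is_series_swap_nonneg (a : nat -> nat -> R) (r : nat -> R) (B : R) :
  (forall k n, 0 <= a k n) ->
  (forall n, is_series (fun k => a k n) (r n)) -> is_series r B ->
  is_series (fun k => Series (fun n => a k n)) B.
Proof.
  intros Ha Hr HB.
  assert (Hr0 : forall n, 0 <= r n).
  { intros n. apply Rle_trans with (a O n); [apply Ha|].
    apply (term_le_is_series (fun k => a k n)); auto. }
  assert (Hex : forall k, ex_series (fun n => a k n)).
  { intros k. apply (@ex_series_le R_AbsRing R_CompleteNormedModule _ r); [|now exists B].
    intros n. change (norm (a k n)) with (Rabs (a k n)). rewrite Rabs_pos_eq by apply Ha.
    apply (term_le_is_series (fun k => a k n)); auto. }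
  set (c := fun k => Series (fun n => a k n)).
  assert (Hc0 : forall k, 0 <= c k).
  { intros k. apply Rle_trans with (a k O); [apply Ha|].
    apply term_le_is_series; auto. apply Series_correct, Hex. }
  assert (HcB : forall K, sum_n c K <= B).
  { intros K. apply sum_n_Series_le with r; auto. intros N. now apply sum_n_le_is_series. }
  destruct (ex_finite_lim_seq_incr (sum_n c) B) as [L HL]; auto.
  { intros K. rewrite sum_Sn_R. specialize (Hc0 (S K)). lra. }
  assert (HLB : L <= B).
  { apply (is_lim_seq_le (sum_n c) (fun _ => B) L B HcB HL (is_lim_seq_const B)). }
  assert (HBL : B <= L).
  { assert (HrL : forall N, sum_n r N <= L).
    { intros N.
      rewrite (sum_n_ext r (fun n => Series (fun k => a k n)))
        by (intros n; symmetry; apply is_series_unique, Hr).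
      apply (sum_n_Series_le (fun n k => a k n) (fun k => c k) L N).
      - auto.
      - intros n. exists (r n). apply Hr.
      - intros k. apply Series_correct, Hex.
      - intros K. apply sum_n_le_is_series; auto. }
    apply (is_lim_seq_le (sum_n r) (fun _ => L) B L HrL HB (is_lim_seq_const L)). }
  replace B with L by lra. exact HL.
Qed.

(** * Mean value inequalities and elementary bounds *)

Lemma is_derive_continuity_pt (f : R -> R) (x l : R) :
  is_derive f x l -> continuity_pt f x.
Proof.
  intros H. apply continuity_pt_filterlim, (ex_derive_continuous f x). now exists l.
Qed.

Lemma le_of_derive_nonneg (h dh : R -> R) a b : a <= b ->
  (forall x, a <= x <= b -> is_derive h x (dh x)) ->
  (forall x, a <= x <= b -> 0 <= dh x) -> h a <= h b.
Proof.
  intros Hab Hd Hp.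
  destruct (MVT_gen h a b dh) as [c [Hc Heq]].
  - intros x Hx. rewrite Rmin_left, Rmax_right in Hx by lra. apply Hd; lra.
  - intros x Hx. rewrite Rmin_left, Rmax_right in Hx by lra.
    apply (is_derive_continuity_pt h x (dh x)), Hd; lra.
  - rewrite Rmin_left, Rmax_right in Hc by lra.
    assert (0 <= dh c * (b - a)) by (apply Rmult_le_pos; [apply Hp|]; lra).
    lra.
Qed.

Lemma Rabs_sub_le_of_derive (f df g dg : R -> R) a b : a <= b ->
  (forall x, a <= x <= b -> is_derive f x (df x)) ->
  (forall x, a <= x <= b -> is_derive g x (dg x)) ->
  (forall x, a <= x <= b -> Rabs (df x) <= dg x) ->
  Rabs (f b - f a) <= g b - g a.
Proof.
  intros Hab Hf Hg Hb.
  assert (Hminus : g a - f a <= g b - f b).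
  { apply (le_of_derive_nonneg (fun x => g x - f x) (fun x => dg x - df x)); auto.
    - intros x Hx. apply (is_derive_minus g f); auto.
    - intros x Hx. specialize (Hb x Hx). apply Rabs_le_between in Hb. lra. }
  assert (Hplus : g a + f a <= g b + f b).
  { apply (le_of_derive_nonneg (fun x => g x + f x) (fun x => dg x + df x)); auto.
    - intros x Hx. apply (is_derive_plus g f); auto.
    - intros x Hx. specialize (Hb x Hx). apply Rabs_le_between in Hb. lra. }
  apply Rabs_le_between. lra.
Qed.

Lemma Rabs_sub_le_of_derive_bound (f df : R -> R) a b B x y :
  (forall t, a <= t <= b -> is_derive f t (df t)) ->
  (forall t, a <= t <= b -> Rabs (df t) <= B) ->
  a <= x <= b -> a <= y <= b -> Rabs (f x - f y) <= B * Rabs (x - y).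
Proof.
  intros Hf Hb.
  assert (Hle : forall x y, a <= x <= b -> a <= y <= b -> x <= y ->
            Rabs (f y - f x) <= B * (y - x)).
  { intros u v Hu Hv Huv.
    replace (B * (v - u)) with ((fun t => B * t) v - (fun t => B * t) u) by ring.
    apply (Rabs_sub_le_of_derive f df (fun t => B * t) (fun _ => B)); auto.
    - intros t Ht. apply Hf. lra.
    - intros t _. auto_derive; auto. ring.
    - intros t Ht. apply Hb. lra. }
  intros Hx Hy. destruct (Rle_dec x y).
  - rewrite Rabs_minus_sym, (Rabs_minus_sym x), (Rabs_pos_eq (y - x)) by lra.
    now apply Hle.
  - rewrite (Rabs_pos_eq (x - y)) by lra. apply Hle; auto. lra.
Qed.

Lemma derive_zero_const (f : R -> R) l r :
  (forall x, l < x < r -> is_derive f x 0) ->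
  forall x y, l < x < r -> l < y < r -> f x = f y.
Proof.
  intros Hd x y Hx Hy.
  assert (Hin : forall t, Rmin x y <= t <= Rmax x y -> l < t < r).
  { intros t [Ht1 Ht2]. split.
    - eapply Rlt_le_trans; [|exact Ht1]. apply Rmin_glb_lt; lra.
    - eapply Rle_lt_trans; [exact Ht2|]. apply Rmax_lub_lt; lra. }
  assert (H : Rabs (f x - f y) <= 0 * Rabs (x - y)).
  { apply (Rabs_sub_le_of_derive_bound f (fun _ => 0) (Rmin x y) (Rmax x y)).
    - intros t Ht. apply Hd, Hin, Ht.
    - intros t _. rewrite Rabs_R0. lra.
    - split; [apply Rmin_l | apply Rmax_l].
    - split; [apply Rmin_r | apply Rmax_r]. }
  rewrite Rmult_0_l in H. pose proof (Rabs_pos (f x - f y)).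
  assert (E : Rabs (f x - f y) = 0) by lra. apply Rabs_eq_0 in E. lra.
Qed.

Lemma eq0_of_derive0_of_is_lim_seq (f : R -> R) (y : nat -> R) :
  (forall x, 0 < x < 1 -> is_derive f x 0) -> (forall n, 0 < y n < 1) ->
  is_lim_seq (fun n => f (y n)) 0 -> forall x, 0 < x < 1 -> f x = 0.
Proof.
  intros Hd Hy Hlim x Hx.
  apply (is_lim_seq_ext _ (fun _ => f x)) in Hlim;
    [|intros n; symmetry; now apply (derive_zero_const f 0 1)].
  apply is_lim_seq_unique in Hlim. rewrite Lim_seq_const in Hlim. now injection Hlim.
Qed.

Lemma Rabs_sin_le t : 0 <= t -> Rabs (sin t) <= t.
Proof.
  intros Ht. replace (sin t) with (sin t - sin 0) by (rewrite sin_0; ring).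
  replace t with ((fun s => s) t - (fun s => s) 0) at 2 by ring.
  apply (Rabs_sub_le_of_derive sin cos (fun s => s) (fun _ => 1)); auto.
  - intros; apply is_derive_sin.
  - intros; auto_derive; auto.
  - intros; apply Rabs_le, COS_bound.
Qed.

Lemma Rabs_cos_sub1_le t : 0 <= t -> Rabs (cos t - 1) <= t ^ 2 / 2.
Proof.
  intros Ht. replace (cos t - 1) with (cos t - cos 0) by (rewrite cos_0; ring).
  replace (t ^ 2 / 2) with ((fun s => s ^ 2 / 2) t - (fun s => s ^ 2 / 2) 0) by field.
  apply (Rabs_sub_le_of_derive cos (fun s => - sin s) (fun s => s ^ 2 / 2) (fun s => s)); auto.
  - intros; apply is_derive_cos.
  - intros; auto_derive; auto. field.
  - intros s Hs. rewrite Rabs_Ropp. apply Rabs_sin_le. lra.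
Qed.

Lemma Rabs_sin_sub_le t : 0 <= t -> Rabs (sin t - t) <= t ^ 3 / 6.
Proof.
  intros Ht.
  replace (sin t - t) with ((fun s => sin s - s) t - (fun s => sin s - s) 0)
    by (rewrite sin_0; ring).
  replace (t ^ 3 / 6) with ((fun s => s ^ 3 / 6) t - (fun s => s ^ 3 / 6) 0) by field.
  apply (Rabs_sub_le_of_derive (fun s => sin s - s) (fun s => cos s - 1)
           (fun s => s ^ 3 / 6) (fun s => s ^ 2 / 2)); auto.
  - intros; auto_derive; auto. ring.
  - intros; auto_derive; auto. field.
  - intros s Hs. apply Rabs_cos_sub1_le. lra.
Qed.

Lemma Rabs_mul_cos_sub_sin_le t : 0 <= t -> Rabs (t * cos t - sin t) <= t ^ 3 / 3.
Proof.
  intros Ht.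
  replace (t * cos t - sin t)
    with ((fun s => s * cos s - sin s) t - (fun s => s * cos s - sin s) 0)
    by (rewrite sin_0; ring).
  replace (t ^ 3 / 3) with ((fun s => s ^ 3 / 3) t - (fun s => s ^ 3 / 3) 0) by field.
  apply (Rabs_sub_le_of_derive (fun s => s * cos s - sin s) (fun s => - (s * sin s))
           (fun s => s ^ 3 / 3) (fun s => s ^ 2)); auto.
  - intros; auto_derive; auto. ring.
  - intros; auto_derive; auto. field.
  - intros s Hs. rewrite Rabs_Ropp, Rabs_mult, Rabs_pos_eq by lra.
    replace (s ^ 2) with (s * s) by ring.
    apply Rmult_le_compat_l; [lra|]. apply Rabs_sin_le. lra.
Qed.

Lemma ln_le_sub1 x : 0 < x -> ln x <= x - 1.
Proof.
  intros Hx. pose proof (exp_ineq1_le (ln x)) as H. rewrite exp_ln in H by exact Hx. lra.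
Qed.

Lemma Rabs_div_le_inv u w w0 : Rabs u <= 1 -> 0 < w0 <= w -> Rabs (u / w) <= / w0.
Proof.
  intros Hu Hw. unfold Rdiv. rewrite Rabs_mult, Rabs_inv, (Rabs_pos_eq w) by lra.
  rewrite <- (Rmult_1_l (/ w0)). apply Rmult_le_compat; try apply Rabs_pos; [|exact Hu|].
  - apply Rlt_le, Rinv_0_lt_compat. lra.
  - apply Rinv_le_contravar; lra.
Qed.

Lemma div_le_of_ge1 a d : 0 <= a -> 1 <= d -> a / d <= a.
Proof.
  intros Ha Hd. unfold Rdiv. rewrite <- (Rmult_1_r a) at 2. apply Rmult_le_compat_l; [exact Ha|].
  rewrite <- Rinv_1. apply Rinv_le_contravar; lra.
Qed.

(** * Series of functions *)

Lemma CVU_dom_Mtest (u : nat -> R -> R) (M : nat -> R) (D : R -> Prop) :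
  (forall n x, D x -> Rabs (u n x) <= M n) -> ex_series M ->
  CVU_dom (fun N x => sum_n (fun k => u k x) N) D.
Proof.
  intros Hb HM. apply CVU_dom_cauchy. intros eps.
  destruct (Cauchy_ex_series M HM eps) as [N HN].
  exists N. intros n m x Hx Hn Hm.
  assert (Hlt : forall p q, (N <= p)%nat -> (p < q)%nat ->
     Rabs (sum_n (fun k => u k x) q - sum_n (fun k => u k x) p) < eps).
  { intros p q Hp Hq.
    replace (sum_n (fun k => u k x) q - sum_n (fun k => u k x) p)
      with (sum_n_m (fun k => u k x) (S p) q) by (apply (sum_n_m_sum_n (fun k => u k x) p q); lia).
    eapply Rle_lt_trans; [apply (norm_sum_n_m (fun k => u k x))|].
    eapply Rle_lt_trans; [apply sum_n_m_le; intros k; apply (Hb k x Hx)|].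
    eapply Rle_lt_trans; [apply Rle_abs|]. apply (HN (S p) q); lia. }
  destruct (Compare_dec.lt_eq_lt_dec m n) as [[Hmn| ->]|Hnm].
  - now apply Hlt.
  - rewrite Rminus_diag, Rabs_R0. apply cond_pos.
  - rewrite Rabs_minus_sym. now apply Hlt.
Qed.

Lemma CVU_dom_of_bound (fn : nat -> R -> R) (f : R -> R) (D : R -> Prop) (e : nat -> R) :
  (forall n x, D x -> Rabs (fn n x - f x) <= e n) -> is_lim_seq e 0 ->
  CVU_dom fn D /\ (forall x, D x -> is_lim_seq (fun n => fn n x) (f x)).
Proof.
  intros Hb He.
  assert (Hlim : forall x, D x -> is_lim_seq (fun n => fn n x) (f x)).
  { intros x Hx. apply is_lim_seq_abs_0 in He.
    apply (is_lim_seq_le_le (fun n => f x - Rabs (e n)) _ (fun n => f x + Rabs (e n))).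
    - intros n. specialize (Hb n x Hx). apply Rabs_le_between in Hb.
      pose proof (Rle_abs (e n)). lra.
    - replace (Finite (f x)) with (Rbar_minus (f x) 0) by (simpl; f_equal; ring).
      apply is_lim_seq_minus'; [apply is_lim_seq_const | exact He].
    - replace (Finite (f x)) with (Rbar_plus (f x) 0) by (simpl; f_equal; ring).
      apply is_lim_seq_plus'; [apply is_lim_seq_const | exact He]. }
  split; [|exact Hlim].
  intros eps. apply is_lim_seq_spec in He. destruct (He eps) as [N HN].
  exists N. intros n Hn x Hx. rewrite (is_lim_seq_unique _ _ (Hlim x Hx)). simpl.
  eapply Rle_lt_trans; [apply Hb; auto|].
  specialize (HN n Hn). rewrite Rminus_0_r in HN.
  eapply Rle_lt_trans; [apply Rle_abs | exact HN].
Qed.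

Lemma continuity_pt_sum_n (u : nat -> R -> R) x N :
  (forall k, continuity_pt (u k) x) ->
  continuity_pt (fun y => sum_n (fun k => u k y) N) x.
Proof.
  intros Hu. induction N as [|N IH].
  - apply (continuity_pt_ext (u O)); [intros; now rewrite sum_O | apply Hu].
  - apply (continuity_pt_ext ((fun y => sum_n (fun k => u k y) N) + u (S N))%F).
    + intros y. now rewrite sum_Sn_R.
    + now apply continuity_pt_plus.
Qed.

Lemma continuity_pt_Series (u : nat -> R -> R) (D : R -> Prop) x :
  open D -> CVU_dom (fun N y => sum_n (fun k => u k y) N) D ->
  (forall k y, D y -> continuity_pt (u k) y) -> D x ->
  continuity_pt (fun y => Series (fun k => u k y)) x.
Proof.
  intros HD Hcvu Hu Hx.
  apply (CVU_cont_open _ D HD Hcvu); [|exact Hx].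
  intros N y Hy. apply continuity_pt_sum_n. intros k. now apply Hu.
Qed.

Lemma is_lim_seq_Series_within (u : nat -> R -> R) (M : nat -> R) (D : R -> Prop) b
    (y : nat -> R) :
  (forall k x, D x -> Rabs (u k x) <= M k) -> ex_series M ->
  (forall k, continuity_pt (u k) b) -> D b -> (forall n, D (y n)) -> is_lim_seq y b ->
  is_lim_seq (fun n => Series (fun k => u k (y n))) (Series (fun k => u k b)).
Proof.
  intros Hb HM Hc HDb HDy Hy. apply is_lim_seq_spec. intros eps.
  assert (Heps3 : 0 < eps / 3) by (pose proof (cond_pos eps); lra).
  destruct (CVU_dom_Mtest u M D Hb HM (mkposreal _ Heps3)) as [N HN]. simpl in HN.
  destruct (proj1 (continuity_pt_locally _ b) (continuity_pt_sum_n u b N Hc)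
              (mkposreal _ Heps3)) as [d Hd].
  destruct (proj2 (is_lim_seq_spec y b) Hy d) as [N' HN'].
  exists N'. intros n Hn.
  pose proof (HN N (le_n N) (y n) (HDy n)) as Ey. pose proof (HN N (le_n N) b HDb) as Eb.
  specialize (Hd (y n) (HN' n Hn)). simpl in Hd.
  change (Series (fun k => u k (y n)))
    with (real (Lim_seq (fun m => sum_n (fun k => u k (y n)) m))).
  change (Series (fun k => u k b)) with (real (Lim_seq (fun m => sum_n (fun k => u k b) m))).
  apply Rabs_lt_between in Ey. apply Rabs_lt_between in Eb.
  apply Rabs_lt_between in Hd. apply Rabs_lt_between. lra.
Qed.

Lemma is_derive_Series (u du : nat -> R -> R) (l r x : R) :
  (forall k y, l < y < r -> is_derive (u k) y (du k y)) ->
  (forall k y, l < y < r -> continuity_pt (du k) y) ->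
  CVU_dom (fun N y => sum_n (fun k => u k y) N) (fun y => l < y < r) ->
  CVU_dom (fun N y => sum_n (fun k => du k y) N) (fun y => l < y < r) ->
  l < x < r -> is_derive (fun y => Series (fun k => u k y)) x (Series (fun k => du k x)).
Proof.
  intros Hd Hc Hcvu Hcvu' Hx.
  set (D := fun y => l < y < r).
  set (fn := fun N y => sum_n (fun k => u k y) N).
  assert (Hfn : forall N y, D y -> is_derive (fn N) y (sum_n (fun k => du k y) N)).
  { intros N y Hy. apply (is_derive_sum_n (fun k y => u k y)). intros k _. now apply Hd. }
  assert (HDer : forall N y, D y -> Derive (fn N) y = sum_n (fun k => du k y) N).
  { intros N y Hy. apply is_derive_unique, Hfn, Hy. }
  assert (Hopen : open D).
  { apply (open_and (fun y => l < y) (fun y => y < r)); [apply open_gt | apply open_lt]. }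
  assert (Hconn : is_connected D) by (intros a b z Ha Hb Hz; unfold D in *; lra).
  assert (Hcont : forall N y, D y -> continuity_pt (Derive (fn N)) y).
  { intros N y Hy.
    apply (continuity_pt_ext_loc (fun y => sum_n (fun k => du k y) N)).
    - apply (filter_imp D); [intros z Hz; symmetry; now apply HDer | exact (Hopen y Hy)].
    - apply continuity_pt_sum_n. intros k. now apply Hc. }
  assert (Hcvu'' : CVU_dom (fun N y => Derive (fn N) y) D).
  { intros eps. destruct (Hcvu' eps) as [N HN]. exists N. intros n Hn y Hy.
    rewrite HDer by exact Hy.
    rewrite (Lim_seq_ext _ (fun n => sum_n (fun k => du k y) n)) by (intros; now apply HDer).
    now apply HN. }
  pose proof (CVU_Derive fn D Hopen Hconn Hcvu (fun N y Hy => ex_intro _ _ (Hfn N y Hy))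
                Hcont Hcvu'' x Hx) as H.
  rewrite (Lim_seq_ext _ (fun n => sum_n (fun k => du k x) n)) in H
    by (intros; now apply HDer).
  exact H.
Qed.

Lemma is_derive_Series_geom_dominated (u du : nat -> R -> R) (C C' x : R) :
  (forall k y, is_derive (u k) y (du k y)) ->
  (forall k y, continuity_pt (du k) y) ->
  (forall k y r, Rabs y <= r -> r <= 1 -> Rabs (u k y) <= C * r ^ k) ->
  (forall k y r, Rabs y <= r -> r <= 1 -> Rabs (du k y) <= C' * r ^ k) ->
  -1 < x < 1 -> is_derive (fun y => Series (fun k => u k y)) x (Series (fun k => du k x)).
Proof.
  intros Hd Hc Hu Hdu Hx.
  set (r := (1 + Rabs x) / 2).
  assert (Hxr : Rabs x < r < 1)
    by (assert (Rabs x < 1) by (apply Rabs_def1; lra); unfold r; lra).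
  assert (Hgeom : forall c, ex_series (fun k => c * r ^ k)).
  { intros c. apply (@ex_series_scal_l R_AbsRing R_NormedModule c (fun k => r ^ k)).
    apply ex_series_geom. rewrite Rabs_pos_eq; pose proof (Rabs_pos x); lra. }
  assert (Hin : forall y, - r < y < r -> Rabs y <= r) by (intros y Hy; apply Rabs_le; lra).
  apply (is_derive_Series u du (- r) r).
  - intros k y _. apply Hd.
  - intros k y _. apply Hc.
  - apply (CVU_dom_Mtest _ (fun k => C * r ^ k)); [|apply Hgeom].
    intros k y Hy. apply Hu; [now apply Hin | lra].
  - apply (CVU_dom_Mtest _ (fun k => C' * r ^ k)); [|apply Hgeom].
    intros k y Hy. apply Hdu; [now apply Hin | lra].
  - destruct (Rabs_def2 x r); lra.
Qed.

(** * The derivative of the Clausen function *)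

Definition cos_sum (N : nat) (x : R) := sum_n (fun m => cos (INR (S m) * x) / INR (S m)) N.

Lemma is_derive_cos_sum N x :
  is_derive (cos_sum N) x (- sum_n (fun m => sin (INR (S m) * x)) N).
Proof.
  unfold cos_sum. rewrite <- sum_n_opp_R.
  apply (is_derive_sum_n (fun m y => cos (INR (S m) * y) / INR (S m))).
  intros k _. auto_derive; [exact I|].
  change (match k with 0%nat => 1 | S _ => INR k + 1 end) with (INR (S k)).
  field. apply not_0_INR. lia.
Qed.

Lemma cos_S_mult_PI m : cos (INR (S m) * PI) = (-1) ^ S m.
Proof.
  induction m as [|m IH]; [simpl; rewrite Rmult_1_l, cos_PI; ring|].
  rewrite S_INR, Rmult_plus_distr_r, Rmult_1_l, neg_cos, IH. simpl. ring.
Qed.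

(* [ln (1 + t)] minus its Taylor polynomial of degree [N + 1]. *)
Definition ln1p_rem (N : nat) (t : R) :=
  sum_n (fun m => (- t) ^ S m / INR (S m)) N + ln (1 + t).

Lemma is_derive_ln1p_rem N t : 0 <= t ->
  is_derive (ln1p_rem N) t ((- t) ^ S N / (1 + t)).
Proof.
  intros Ht.
  assert (Hgeom : (1 + t) * sum_n (fun m => (- t) ^ m) N = 1 - (- t) ^ S N).
  { clear Ht. induction N as [|N IH]; [rewrite sum_O; simpl; ring|].
    rewrite sum_Sn_R, Rmult_plus_distr_l, IH. simpl. ring. }
  replace ((- t) ^ S N / (1 + t)) with (- sum_n (fun m => (- t) ^ m) N + / (1 + t)).
  2:{ replace (sum_n (fun m => (- t) ^ m) N) with ((1 - (- t) ^ S N) / (1 + t))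
        by (rewrite <- Hgeom; field; lra).
      field. lra. }
  rewrite <- sum_n_opp_R.
  apply (is_derive_plus (fun y => sum_n (fun m => (- y) ^ S m / INR (S m)) N)
           (fun y => ln (1 + y))).
  - apply (is_derive_sum_n (fun m y => (- y) ^ S m / INR (S m))).
    intros k _. auto_derive; [exact I|].
    change (match k with 0%nat => 1 | S _ => INR k + 1 end) with (INR (S k)).
    field. apply not_0_INR. lia.
  - auto_derive; [lra|]. field. lra.
Qed.

Lemma Rabs_cos_sum_PI_add_ln2 N : Rabs (cos_sum N PI + ln 2) <= / (INR N + 2).
Proof.
  assert (H1 : ln1p_rem N 1 = cos_sum N PI + ln 2).
  { unfold ln1p_rem, cos_sum. replace (1 + 1) with 2 by ring. f_equal.
    apply sum_n_ext. intros m. now rewrite cos_S_mult_PI. }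
  assert (H0 : ln1p_rem N 0 = 0).
  { unfold ln1p_rem. rewrite Rplus_0_r, ln_1, Rplus_0_r.
    rewrite (sum_n_ext _ (fun _ => 0)) by (intros m; simpl; unfold Rdiv; ring).
    clear. induction N as [|N IH]; [now rewrite sum_O|]. rewrite sum_Sn_R, IH. ring. }
  set (g := fun t => t ^ S (S N) / INR (S (S N))).
  replace (/ (INR N + 2)) with (g 1 - g 0)
    by (unfold g; rewrite pow1, pow_i by lia; rewrite !S_INR; field; pose proof (pos_INR N); lra).
  replace (cos_sum N PI + ln 2) with (ln1p_rem N 1 - ln1p_rem N 0) by (rewrite H0, H1; ring).
  apply (Rabs_sub_le_of_derive _ (fun t => (- t) ^ S N / (1 + t)) g (fun t => t ^ S N)).
  - lra.
  - intros t Ht. apply is_derive_ln1p_rem. lra.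
  - intros t _. unfold g. auto_derive; [exact I|].
    change (match N with 0%nat => 1 | S _ => INR N + 1 end) with (INR (S N)).
    simpl pow. field. pose proof (pos_INR (S N)). lra.
  - intros t Ht. unfold Rdiv.
    rewrite Rabs_mult, <- RPow_abs, Rabs_Ropp, Rabs_pos_eq, Rabs_pos_eq
      by (try apply Rlt_le, Rinv_0_lt_compat; lra).
    rewrite <- (Rmult_1_r (t ^ S N)) at 2. apply Rmult_le_compat_l; [apply pow_le; lra|].
    rewrite <- Rinv_1. apply Rinv_le_contravar; lra.
Qed.

Lemma sin_sum_closed_form N x :
  2 * sin (x / 2) * sum_n (fun m => sin (INR (S m) * x)) N
  = cos (x / 2) - cos ((INR N + 3 / 2) * x).
Proof.
  assert (Hprod : forall A B, 2 * sin A * sin B = cos (B - A) - cos (B + A))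
    by (intros A B; rewrite cos_minus, cos_plus; ring).
  induction N as [|N IH].
  - rewrite sum_O, Hprod. simpl INR.
    replace (1 * x - x / 2) with (x / 2) by field.
    replace (1 * x + x / 2) with ((0 + 3 / 2) * x) by field.
    reflexivity.
  - rewrite sum_Sn_R, Rmult_plus_distr_l, IH, Hprod, !S_INR.
    replace ((INR N + 1 + 1) * x - x / 2) with ((INR N + 3 / 2) * x) by field.
    replace ((INR N + 1 + 1) * x + x / 2) with ((INR N + 1 + 3 / 2) * x) by field.
    ring.
Qed.

(* Summing the Dirichlet kernel in closed form, [cos_sum N x + ln (2 sin (x/2))] is a
   boundary term of size O(1/N) plus a function whose derivative is O(1/N). *)
Definition cos_sum_defect (N : nat) (x : R) :=
  cos_sum N x + ln (2 * sin (x / 2))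
  - sin ((INR N + 3 / 2) * x) / (2 * (INR N + 3 / 2) * sin (x / 2)).

Lemma is_derive_cos_sum_defect N x : 0 < sin (x / 2) ->
  is_derive (cos_sum_defect N) x
    (sin ((INR N + 3 / 2) * x) * cos (x / 2) / (4 * (INR N + 3 / 2) * sin (x / 2) ^ 2)).
Proof.
  intros Hs. set (a := INR N + 3 / 2).
  assert (Ha : 0 < a) by (unfold a; pose proof (pos_INR N); lra).
  assert (HS : @eq R (sum_n (fun m => sin (INR (S m) * x)) N)
                 ((cos (x / 2) - cos (a * x)) / (2 * sin (x / 2)))).
  { apply (Rmult_eq_reg_l (2 * sin (x / 2))); [|lra].
    rewrite sin_sum_closed_form. fold a. field. lra. }
  assert (D2 : is_derive (fun y => ln (2 * sin (y / 2))) x (cos (x / 2) / (2 * sin (x / 2)))).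
  { auto_derive; unfold Rdiv in *; [lra|]. field. lra. }
  assert (D3 : is_derive (fun y => sin (a * y) / (2 * a * sin (y / 2))) x
     (cos (a * x) / (2 * sin (x / 2)) - sin (a * x) * cos (x / 2) / (4 * a * sin (x / 2) ^ 2))).
  { auto_derive; unfold Rdiv in *; [apply Rgt_not_eq, Rmult_lt_0_compat; lra|].
    field. lra. }
  assert (D : is_derive (cos_sum_defect N) x
                (- sum_n (fun m => sin (INR (S m) * x)) N + cos (x / 2) / (2 * sin (x / 2))
                 - (cos (a * x) / (2 * sin (x / 2))
                    - sin (a * x) * cos (x / 2) / (4 * a * sin (x / 2) ^ 2))))
    by exact (is_derive_minus _ _ _ _ _
                (is_derive_plus _ _ _ _ _ (is_derive_cos_sum N x) D2) D3).
  rewrite HS in D. fold a.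
  replace (sin (a * x) * cos (x / 2) / (4 * a * sin (x / 2) ^ 2)) with
    (- ((cos (x / 2) - cos (a * x)) / (2 * sin (x / 2))) + cos (x / 2) / (2 * sin (x / 2))
     - (cos (a * x) / (2 * sin (x / 2)) - sin (a * x) * cos (x / 2) / (4 * a * sin (x / 2) ^ 2)))
    by (field; lra).
  exact D.
Qed.

Lemma sin_half_ge d x : 0 < d < PI -> d <= x <= 2 * PI - d -> sin (d / 2) <= sin (x / 2).
Proof.
  intros Hd Hx. destruct (Rle_dec (x / 2) (PI / 2)).
  - apply sin_incr_1; lra.
  - rewrite <- (sin_PI_x (x / 2)). apply sin_incr_1; lra.
Qed.

Lemma Rabs_cos_sum_defect_sub_le d N x : 0 < d < PI -> d <= x <= 2 * PI - d ->
  Rabs (cos_sum_defect N x - cos_sum_defect N PI)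
  <= PI / (4 * sin (d / 2) ^ 2) / (INR N + 3 / 2).
Proof.
  intros Hd Hx. pose proof PI_RGT_0.
  set (s0 := sin (d / 2)). set (a := INR N + 3 / 2).
  assert (Hs0 : 0 < s0) by (apply sin_gt_0; lra).
  assert (Ha : 0 < a) by (unfold a; pose proof (pos_INR N); lra).
  assert (Hden : 0 < 4 * a * s0 ^ 2) by (apply Rmult_lt_0_compat; [lra | apply pow_lt; lra]).
  assert (Hsx : forall t, d <= t <= 2 * PI - d -> s0 <= sin (t / 2))
    by (intros t Ht; now apply sin_half_ge).
  replace (PI / (4 * s0 ^ 2) / a) with (/ (4 * a * s0 ^ 2) * PI) by (field; lra).
  eapply Rle_trans.
  - apply (Rabs_sub_le_of_derive_bound (cos_sum_defect N)
             (fun t => sin (a * t) * cos (t / 2) / (4 * a * sin (t / 2) ^ 2))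
             d (2 * PI - d) (/ (4 * a * s0 ^ 2))); [| |exact Hx|lra].
    + intros t Ht. apply is_derive_cos_sum_defect. pose proof (Hsx t Ht). lra.
    + intros t Ht. pose proof (Hsx t Ht). apply Rabs_div_le_inv.
      * rewrite Rabs_mult, <- (Rmult_1_l 1).
        apply Rmult_le_compat; try apply Rabs_pos; apply Rabs_le;
          [apply SIN_bound | apply COS_bound].
      * split; [exact Hden|]. apply Rmult_le_compat_l; [lra|]. apply pow_incr. lra.
  - apply Rmult_le_compat_l; [apply Rlt_le, Rinv_0_lt_compat, Hden|]. apply Rabs_le. lra.
Qed.

Lemma Rabs_cos_sum_add_ln_le d N x : 0 < d < PI -> d <= x <= 2 * PI - d ->
  Rabs (cos_sum N x + ln (2 * sin (x / 2)))
  <= (PI / (4 * sin (d / 2) ^ 2) + 1 + 1 / 2 + 1 / (2 * sin (d / 2))) / (INR N + 3 / 2).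
Proof.
  intros Hd Hx. pose proof (sin_half_ge d x Hd Hx) as Hsx.
  set (s0 := sin (d / 2)) in *. set (a := INR N + 3 / 2).
  assert (Hs0 : 0 < s0) by (apply sin_gt_0; lra).
  assert (Ha : 0 < a) by (unfold a; pose proof (pos_INR N); lra).
  assert (Halt : Rabs (cos_sum N PI + ln 2) <= 1 / a).
  { eapply Rle_trans; [apply Rabs_cos_sum_PI_add_ln2|].
    unfold Rdiv. rewrite Rmult_1_l. apply Rinv_le_contravar; [lra|]. unfold a. lra. }
  assert (HPIterm : Rabs (sin (a * PI) / (2 * a)) <= (1 / 2) / a).
  { replace ((1 / 2) / a) with (/ (2 * a)) by (field; lra).
    apply Rabs_div_le_inv; [apply Rabs_le, SIN_bound | lra]. }
  assert (Hxterm : Rabs (sin (a * x) / (2 * a * sin (x / 2))) <= (1 / (2 * s0)) / a).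
  { replace ((1 / (2 * s0)) / a) with (/ (2 * a * s0)) by (field; lra).
    apply Rabs_div_le_inv; [apply Rabs_le, SIN_bound|].
    split; [apply Rmult_lt_0_compat; lra|]. apply Rmult_le_compat_l; lra. }
  pose proof (Rabs_cos_sum_defect_sub_le d N x Hd Hx) as Hdefect. fold s0 a in Hdefect.
  replace (cos_sum N x + ln (2 * sin (x / 2))) with
    ((cos_sum_defect N x - cos_sum_defect N PI) + (cos_sum N PI + ln 2)
     - sin (a * PI) / (2 * a) + sin (a * x) / (2 * a * sin (x / 2)))
    by (unfold cos_sum_defect; fold a; rewrite sin_PI2, !Rmult_1_r; ring).
  replace ((PI / (4 * s0 ^ 2) + 1 + 1 / 2 + 1 / (2 * s0)) / a)
    with (PI / (4 * s0 ^ 2) / a + 1 / a + (1 / 2) / a + (1 / (2 * s0)) / a) by (field; lra).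
  unfold Rminus. repeat (eapply Rle_trans; [apply Rabs_triang|]; apply Rplus_le_compat);
    try rewrite Rabs_Ropp; assumption.
Qed.

Lemma cos_sum_uniform_bound d : 0 < d < PI -> exists C, forall N x, d <= x <= 2 * PI - d ->
  Rabs (cos_sum N x + ln (2 * sin (x / 2))) <= C / INR (S N).
Proof.
  intros Hd. set (s0 := sin (d / 2)).
  assert (Hs0 : 0 < s0) by (apply sin_gt_0; lra).
  set (C := PI / (4 * s0 ^ 2) + 1 + 1 / 2 + 1 / (2 * s0)).
  assert (HC : 0 <= C).
  { assert (0 < PI / (4 * s0 ^ 2))
      by (apply Rdiv_lt_0_compat;
          [apply PI_RGT_0 | apply Rmult_lt_0_compat; [lra | apply pow_lt; lra]]).
    assert (0 < 1 / (2 * s0)) by (apply Rdiv_lt_0_compat; lra). unfold C. lra. }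
  exists C. intros N x Hx. eapply Rle_trans; [now apply Rabs_cos_sum_add_ln_le|].
  unfold Rdiv. apply Rmult_le_compat_l; [exact HC|].
  apply Rinv_le_contravar; [apply lt_0_INR; lia | rewrite S_INR; lra].
Qed.

Lemma Rabs_clausen_term_le n x : Rabs (sin (INR (S n) * x) / INR (S n) ^ 2) <= / INR (S n) ^ 2.
Proof.
  apply Rabs_div_le_inv; [apply Rabs_le, SIN_bound|].
  split; [apply pow_lt, lt_0_INR; lia | lra].
Qed.

Lemma is_derive_clausen_term n x :
  is_derive (fun y => sin (INR (S n) * y) / INR (S n) ^ 2) x (cos (INR (S n) * x) / INR (S n)).
Proof.
  auto_derive; [exact I|].
  change (match n with 0%nat => 1 | S _ => INR n + 1 end) with (INR (S n)).
  field. apply not_0_INR. lia.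
Qed.

Lemma is_derive_Cl2 x : 0 < x < 2 * PI -> is_derive Cl2 x (- ln (2 * sin (x / 2))).
Proof.
  intros Hx.
  set (d := Rmin x (2 * PI - x) / 2).
  assert (Hd : 0 < d < PI /\ d < x < 2 * PI - d).
  { unfold d. destruct (Rle_dec x (2 * PI - x)).
    - rewrite Rmin_left by lra. lra.
    - rewrite Rmin_right by lra. lra. }
  destruct (cos_sum_uniform_bound d) as [C HC]; [lra|].
  destruct (CVU_dom_of_bound cos_sum (fun y => - ln (2 * sin (y / 2))) (fun y => d < y < 2 * PI - d)
              (fun N => C / INR (S N))) as [Hcvu Hlim].
  - intros N y Hy. unfold Rminus. rewrite Ropp_involutive. apply HC. lra.
  - unfold Rdiv. replace (Finite 0) with (Rbar_mult C 0) by (simpl; f_equal; ring).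
    apply is_lim_seq_scal_l, is_lim_seq_inv_S.
  - replace (- ln (2 * sin (x / 2))) with (Series (fun n => cos (INR (S n) * x) / INR (S n)))
      by (apply is_series_unique, (Hlim x); lra).
    apply (is_derive_Series (fun n y => sin (INR (S n) * y) / INR (S n) ^ 2)
             (fun n y => cos (INR (S n) * y) / INR (S n)) d (2 * PI - d));
      [| | | exact Hcvu | lra].
    + intros n y _. apply is_derive_clausen_term.
    + intros n y _. eapply is_derive_continuity_pt. auto_derive; [exact I | reflexivity].
    + apply (CVU_dom_Mtest _ (fun n => / INR (S n) ^ 2)); [|apply ex_series_inv_sq].
      intros n y _. apply Rabs_clausen_term_le.
Qed.

Lemma continuity_pt_Cl2 x : continuity_pt Cl2 x.
Proof.
  apply (continuity_pt_Series (fun n y => sin (INR (S n) * y) / INR (S n) ^ 2) (fun _ => True));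
    [apply open_true | | | exact I].
  - apply (CVU_dom_Mtest _ (fun n => / INR (S n) ^ 2)); [|apply ex_series_inv_sq].
    intros n y _. apply Rabs_clausen_term_le.
  - intros n y _. eapply is_derive_continuity_pt, is_derive_clausen_term.
Qed.

Lemma Cl2_0 : Cl2 0 = 0.
Proof.
  apply Series_zero. intros n. rewrite Rmult_0_r, sin_0. unfold Rdiv. ring.
Qed.

Lemma Cl2_opp x : Cl2 (- x) = - Cl2 x.
Proof.
  unfold Cl2. rewrite <- Series_opp. apply Series_ext. intros n.
  rewrite Ropp_mult_distr_r_reverse, sin_neg. unfold Rdiv. ring.
Qed.

(** * Partial fractions of the cotangent *)

Lemma Rabs_cot_sub_inv_le y : 0 < y <= 1 -> Rabs (cos y / sin y - / y) <= y.
Proof.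
  intros Hy.
  pose proof (Rabs_sin_sub_le y ltac:(lra)) as H1. apply Rabs_le_between in H1.
  assert (Hsin : 5 * y / 6 <= sin y).
  { assert (y ^ 3 / 6 <= y / 6) by (simpl; assert (y * y <= 1) by nra; nra). lra. }
  pose proof (Rabs_mul_cos_sub_sin_le y ltac:(lra)) as H2.
  replace (cos y / sin y - / y) with ((y * cos y - sin y) / (y * sin y)) by (field; lra).
  unfold Rdiv. rewrite Rabs_mult, Rabs_inv, (Rabs_pos_eq (y * sin y)) by nra.
  apply Rle_trans with ((y ^ 3 / 3) * / (y * (5 * y / 6))).
  - apply Rmult_le_compat; [apply Rabs_pos | apply Rlt_le, Rinv_0_lt_compat; nra | exact H2|].
    apply Rinv_le_contravar; [nra|]. apply Rmult_le_compat_l; lra.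
  - replace (y ^ 3 / 3 * / (y * (5 * y / 6))) with (2 * y / 5) by (field; lra). lra.
Qed.

(* Also true at [u = 0], where both sides vanish because [/ 0 = 0]. *)
Lemma Rabs_pi_cot_sub_inv_le u : Rabs (PI * u) <= 1 ->
  Rabs (PI * cos (PI * u) / sin (PI * u) - / u) <= PI * PI * Rabs u.
Proof.
  intros Hu. pose proof PI_RGT_0 as HPI.
  assert (Hpos : forall v, 0 < v -> PI * v <= 1 ->
            Rabs (PI * cos (PI * v) / sin (PI * v) - / v) <= PI * PI * v).
  { intros v Hv Hv1.
    assert (0 < sin (PI * v)) by (apply sin_gt_0; pose proof PI2_3_2; nra).
    replace (PI * cos (PI * v) / sin (PI * v) - / v)
      with (PI * (cos (PI * v) / sin (PI * v) - / (PI * v))) by (field; lra).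
    rewrite Rabs_mult, (Rabs_pos_eq PI), Rmult_assoc by lra.
    apply Rmult_le_compat_l; [lra|]. apply Rabs_cot_sub_inv_le. nra. }
  destruct (Rtotal_order u 0) as [Hneg | [-> | Hpos']].
  - rewrite Rabs_mult, (Rabs_pos_eq PI), (Rabs_left u) in Hu by lra.
    rewrite (Rabs_left u) by lra.
    replace (PI * cos (PI * u) / sin (PI * u) - / u)
      with (- (PI * cos (PI * - u) / sin (PI * - u) - / - u))
      by (rewrite Ropp_mult_distr_r_reverse, cos_neg, sin_neg, Rinv_opp; unfold Rdiv;
          rewrite Rinv_opp; ring).
    rewrite Rabs_Ropp. apply Hpos; lra.
  - rewrite Rmult_0_r, sin_0, Rinv_0, Rabs_R0. unfold Rdiv. rewrite Rinv_0.
    rewrite Rmult_0_r, Rminus_0_r, Rabs_R0. lra.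
  - rewrite Rabs_mult, (Rabs_pos_eq PI), (Rabs_pos_eq u) in Hu by lra.
    rewrite (Rabs_pos_eq u) by lra. apply Hpos; lra.
Qed.

Lemma continuity_pt_pi_cot_sub_inv :
  continuity_pt (fun u => PI * cos (PI * u) / sin (PI * u) - / u) 0.
Proof.
  pose proof PI_RGT_0 as HPI.
  apply continuity_pt_locally. intros eps.
  assert (Hd : 0 < Rmin (/ PI) (eps / (PI * PI))).
  { apply Rmin_pos; [apply Rinv_0_lt_compat; lra|].
    apply Rdiv_lt_0_compat; [apply cond_pos | nra]. }
  exists (mkposreal _ Hd). intros u Hu. change (Rabs (u - 0) < Rmin (/ PI) (eps / (PI * PI))) in Hu.
  rewrite Rminus_0_r in Hu.
  assert (H0 : PI * cos (PI * 0) / sin (PI * 0) - / 0 = 0)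
    by (rewrite Rmult_0_r, sin_0, Rinv_0; unfold Rdiv; rewrite Rinv_0; ring).
  rewrite H0, Rminus_0_r.
  eapply Rle_lt_trans; [apply Rabs_pi_cot_sub_inv_le|].
  - rewrite Rabs_mult, Rabs_pos_eq by lra.
    apply Rle_trans with (PI * / PI); [|right; field; lra].
    apply Rmult_le_compat_l; [lra|]. apply Rlt_le, (Rlt_le_trans _ _ _ Hu), Rmin_l.
  - apply Rlt_le_trans with (PI * PI * (eps / (PI * PI))); [|right; field; lra].
    apply Rmult_lt_compat_l; [nra|]. apply (Rlt_le_trans _ _ _ Hu), Rmin_r.
Qed.

(* The poles [n + 2] and [-(n + 1)] are paired so that the series converges absolutely
   on (-1/2, 3/2) and is odd about 1/2. *)
Definition pf_term (n : nat) (x : R) := / (x - INR n - 2) + / (x + INR n + 1).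
Definition pf_tail (x : R) := Series (fun n => pf_term n x).

Lemma Rabs_pf_term_le n x : -1/2 < x < 3/2 -> Rabs (pf_term n x) <= 8 * / INR (S n) ^ 2.
Proof.
  intros Hx. pose proof (pos_INR n) as Hn. rewrite S_INR. unfold pf_term.
  replace (/ (x - INR n - 2) + / (x + INR n + 1))
    with ((2 * x - 1) / ((x - INR n - 2) * (x + INR n + 1))) by (field; split; lra).
  unfold Rdiv. rewrite Rabs_mult, Rabs_inv, Rabs_mult.
  rewrite (Rabs_left (x - INR n - 2)), (Rabs_pos_eq (x + INR n + 1)) by lra.
  apply Rle_trans with (2 * / ((INR n + 1/2) * (INR n + 1/2))).
  - apply Rmult_le_compat; [apply Rabs_pos | apply Rlt_le, Rinv_0_lt_compat; nra | |].
    + apply Rabs_le. lra.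
    + apply Rinv_le_contravar; [nra|]. apply Rmult_le_compat; lra.
  - replace (8 * / (INR n + 1) ^ 2) with (2 * / ((INR n + 1) * (INR n + 1) / 4)) by (field; lra).
    apply Rmult_le_compat_l; [lra|]. apply Rinv_le_contravar; nra.
Qed.

Lemma ex_series_pf_bound : ex_series (fun n => 8 * / INR (S n) ^ 2).
Proof. apply (@ex_series_scal_l R_AbsRing R_NormedModule 8), ex_series_inv_sq. Qed.

Lemma is_series_pf_tail x : -1/2 < x < 3/2 -> is_series (fun n => pf_term n x) (pf_tail x).
Proof.
  intros Hx. apply Series_correct.
  apply (@ex_series_le R_AbsRing R_CompleteNormedModule _ _ (fun n => Rabs_pf_term_le n x Hx)).
  apply ex_series_pf_bound.
Qed.

Lemma continuity_pt_pf_tail x : -1/2 < x < 3/2 -> continuity_pt pf_tail x.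
Proof.
  intros Hx. apply (continuity_pt_Series pf_term (fun y => -1/2 < y < 3/2)); [| | |exact Hx].
  - apply (open_and (fun y => -1/2 < y) (fun y => y < 3/2)); [apply open_gt | apply open_lt].
  - apply (CVU_dom_Mtest _ (fun n => 8 * / INR (S n) ^ 2)); [|apply ex_series_pf_bound].
    intros n y Hy. now apply Rabs_pf_term_le.
  - intros n y Hy. pose proof (pos_INR n). eapply is_derive_continuity_pt.
    unfold pf_term. auto_derive; [repeat split; lra | reflexivity].
Qed.

Lemma pf_tail_0 : pf_tail 0 = 1.
Proof.
  apply is_series_unique.
  apply (is_series_ext_R (fun n => / INR (S n) - / INR (S (S n)))).
  - intros n. unfold pf_term. rewrite !S_INR. pose proof (pos_INR n). field. lra.
  - replace 1 with (/ INR (S O) - 0) by (simpl; field).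
    apply (is_series_telescope (fun n => / INR (S n))), is_lim_seq_inv_S.
Qed.

Lemma pf_tail_reflect x : pf_tail (1 - x) = - pf_tail x.
Proof.
  unfold pf_tail. rewrite <- Series_opp. apply Series_ext. intros n. unfold pf_term.
  replace (1 - x - INR n - 2) with (- (x + INR n + 1)) by ring.
  replace (1 - x + INR n + 1) with (- (x - INR n - 2)) by ring.
  rewrite !Rinv_opp. ring.
Qed.

Lemma pf_tail_duplication_partial x N : 0 < x < 1 ->
  sum_n (fun n => pf_term n (x / 2)) N + sum_n (fun n => pf_term n ((x + 1) / 2)) N
  = 2 * sum_n (fun n => pf_term n x) (2 * N + 1) - 2 / (x - 2) - 2 / (x + 1)
    + 2 / (x - 2 * INR N - 4) + 2 / (x + 2 * INR N + 3).
Proof.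
  intros Hx. induction N as [|N IH].
  - simpl (2 * 0 + 1)%nat. rewrite !sum_Sn_R, !sum_O. unfold pf_term. simpl INR.
    field; repeat split; lra.
  - replace (2 * S N + 1)%nat with (S (S (2 * N + 1))) by lia.
    rewrite !sum_Sn_R.
    transitivity (sum_n (fun n => pf_term n (x / 2)) N + sum_n (fun n => pf_term n ((x + 1) / 2)) N
                  + pf_term (S N) (x / 2) + pf_term (S N) ((x + 1) / 2)); [ring|].
    rewrite IH. unfold pf_term. rewrite !S_INR, plus_INR, mult_INR. simpl INR.
    pose proof (pos_INR N). field; repeat split; lra.
Qed.

Lemma pf_tail_duplication x : 0 < x < 1 ->
  pf_tail (x / 2) + pf_tail ((x + 1) / 2) = 2 * pf_tail x - 2 / (x - 2) - 2 / (x + 1).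
Proof.
  intros Hx.
  assert (Hhalf : is_lim_seq (fun N => sum_n (fun n => pf_term n (x / 2)) N
                                       + sum_n (fun n => pf_term n ((x + 1) / 2)) N)
                    (pf_tail (x / 2) + pf_tail ((x + 1) / 2))).
  { apply is_lim_seq_plus'; apply is_series_pf_tail; lra. }
  assert (Hodd : is_lim_seq (fun N => sum_n (fun n => pf_term n x) (2 * N + 1)) (pf_tail x)).
  { apply (is_lim_seq_subseq (sum_n (fun n => pf_term n x)) (pf_tail x) (fun N => 2 * N + 1)%nat).
    - apply eventually_subseq. intros; lia.
    - apply is_series_pf_tail. lra. }
  assert (Hlow : is_lim_seq (fun N => 2 / (x - 2 * INR N - 4)) 0).
  { apply (is_lim_seq_0_of_le_inv _ 2). intros N. pose proof (pos_INR N). rewrite S_INR.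
    replace (2 / (x - 2 * INR N - 4)) with (- (2 / (2 * INR N + 4 - x))) by (field; lra).
    rewrite Rabs_Ropp, Rabs_pos_eq by (apply Rdiv_le_0_compat; lra).
    unfold Rdiv. apply Rmult_le_compat_l; [lra|]. apply Rinv_le_contravar; lra. }
  assert (Hhigh : is_lim_seq (fun N => 2 / (x + 2 * INR N + 3)) 0).
  { apply (is_lim_seq_0_of_le_inv _ 2). intros N. pose proof (pos_INR N). rewrite S_INR.
    rewrite Rabs_pos_eq by (apply Rdiv_le_0_compat; lra).
    unfold Rdiv. apply Rmult_le_compat_l; [lra|]. apply Rinv_le_contravar; lra. }
  assert (Hrhs : is_lim_seq (fun N => 2 * sum_n (fun n => pf_term n x) (2 * N + 1) - 2 / (x - 2)
                   - 2 / (x + 1) + 2 / (x - 2 * INR N - 4) + 2 / (x + 2 * INR N + 3))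
                   (2 * pf_tail x - 2 / (x - 2) - 2 / (x + 1) + 0 + 0)).
  { repeat apply is_lim_seq_plus'; try apply is_lim_seq_minus'; try apply is_lim_seq_minus';
      try apply is_lim_seq_const; auto.
    apply (is_lim_seq_scal_l _ 2 (pf_tail x)), Hodd. }
  apply (is_lim_seq_ext _ _ _ (fun N => eq_sym (pf_tail_duplication_partial x N Hx))) in Hrhs.
  apply is_lim_seq_unique in Hhalf. apply is_lim_seq_unique in Hrhs.
  rewrite Hhalf in Hrhs. injection Hrhs as E. rewrite E. ring.
Qed.

(* Herglotz's trick: a continuous function on [0, 1] vanishing at the endpoints and
   satisfying this duplication formula attains |g|max at some x0, hence at every x0 / 2^k,
   and so |g|max = |g 0| = 0. *)
Lemma herglotz (g : R -> R) :
  (forall c, 0 <= c <= 1 -> continuity_pt g c) -> g 0 = 0 -> g 1 = 0 ->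
  (forall x, 0 < x < 1 -> g (x / 2) + g ((x + 1) / 2) = 2 * g x) ->
  forall x, 0 <= x <= 1 -> g x = 0.
Proof.
  intros Hc H0 H1 Hdup.
  set (h := fun x => Rabs (g x)).
  assert (Hhc : forall c, 0 <= c <= 1 -> continuity_pt h c)
    by (intros c Hc'; apply (continuity_pt_comp g Rabs); [auto | apply Rcontinuity_abs]).
  destruct (continuity_ab_maj h 0 1) as [x0 [Hmax Hx0]]; [lra | exact Hhc|].
  assert (HM : h x0 = 0).
  { destruct (Req_dec x0 0) as [->|E0]; [unfold h; rewrite H0; apply Rabs_R0|].
    destruct (Req_dec x0 1) as [->|E1]; [unfold h; rewrite H1; apply Rabs_R0|].
    assert (Hhalf : forall k, h (x0 * (/ 2) ^ k) = h x0).
    { induction k as [|k IH]; [now rewrite pow_O, Rmult_1_r|].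
      set (y := x0 * (/ 2) ^ k) in *.
      assert (Hy : 0 < y < 1).
      { assert (0 < (/ 2) ^ k <= 1).
        { split; [apply pow_lt; lra|]. rewrite <- (pow1 k). apply pow_incr. lra. }
        unfold y. split; [apply Rmult_lt_0_compat; lra|].
        apply Rle_lt_trans with (x0 * 1); [apply Rmult_le_compat_l|]; lra. }
      replace (x0 * (/ 2) ^ S k) with (y / 2) by (unfold y; simpl; field).
      assert (A1 : h (y / 2) <= h x0) by (apply Hmax; lra).
      assert (A2 : h ((y + 1) / 2) <= h x0) by (apply Hmax; lra).
      assert (A3 : 2 * h x0 <= h (y / 2) + h ((y + 1) / 2)).
      { rewrite <- IH. unfold h.
        replace (2 * Rabs (g y)) with (Rabs (2 * g y)) by (rewrite Rabs_mult, Rabs_pos_eq; lra).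
        rewrite <- (Hdup y Hy). apply Rabs_triang. }
      lra. }
    assert (Hlim : is_lim_seq (fun k => h (x0 * (/ 2) ^ k)) (h 0)).
    { apply (is_lim_seq_continuous h _ 0 (Hhc 0 ltac:(lra))).
      replace (Finite 0) with (Rbar_mult x0 0) by (simpl; f_equal; ring).
      apply is_lim_seq_scal_l, is_lim_seq_geom. rewrite Rabs_pos_eq; lra. }
    apply (is_lim_seq_ext _ (fun _ => h x0) _ Hhalf) in Hlim.
    apply is_lim_seq_unique in Hlim. rewrite Lim_seq_const in Hlim. injection Hlim as ->.
    unfold h. rewrite H0. apply Rabs_R0. }
  intros x Hx. pose proof (Hmax x Hx) as Hhx. unfold h in Hhx, HM.
  rewrite HM in Hhx. pose proof (Rabs_pos (g x)). apply Rabs_eq_0. lra.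
Qed.

(* At the integers 0 and 1 every [/ 0] below evaluates to 0, and the junk values make
   [cot_defect] continuous there. *)
Definition cot_defect (x : R) :=
  PI * cos (PI * x) / sin (PI * x) - / x - / (x - 1) - pf_tail x.

Lemma cot_defect_reflect x : cot_defect (1 - x) = - cot_defect x.
Proof.
  unfold cot_defect. rewrite pf_tail_reflect.
  replace (PI * (1 - x)) with (PI - PI * x) by ring.
  rewrite sin_PI_x, cos_minus, cos_PI, sin_PI.
  replace (1 - x - 1) with (- x) by ring. replace (1 - x) with (- (x - 1)) by ring.
  rewrite !Rinv_opp. unfold Rdiv. ring.
Qed.

Lemma cot_defect_0 : cot_defect 0 = 0.
Proof.
  unfold cot_defect. rewrite pf_tail_0, Rmult_0_r, sin_0, Rinv_0, Rminus_0_l, Rinv_opp, Rinv_1.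
  unfold Rdiv. rewrite Rinv_0. ring.
Qed.

Lemma cot_defect_1 : cot_defect 1 = 0.
Proof.
  replace 1 with (1 - 0) by ring. rewrite cot_defect_reflect, cot_defect_0. ring.
Qed.

Lemma cot_defect_duplication x : 0 < x < 1 ->
  cot_defect (x / 2) + cot_defect ((x + 1) / 2) = 2 * cot_defect x.
Proof.
  intros Hx. pose proof PI_RGT_0.
  set (cot := fun t => PI * cos (PI * t) / sin (PI * t) - / t - / (t - 1)).
  assert (Hcot : cot (x / 2) + cot ((x + 1) / 2) = 2 * cot x - 2 / (x - 2) - 2 / (x + 1)).
  { unfold cot. set (y := PI * (x / 2)).
    assert (Hs : 0 < sin y) by (apply sin_gt_0; unfold y; nra).
    assert (Hc : 0 < cos y) by (apply cos_gt_0; unfold y; nra).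
    replace (PI * ((x + 1) / 2)) with (y + PI / 2) by (unfold y; field).
    replace (PI * x) with (2 * y) by (unfold y; field).
    rewrite sin_plus, cos_plus, sin_PI2, cos_PI2, sin_2a, cos_2a.
    field; repeat split; lra. }
  pose proof (pf_tail_duplication x Hx) as Hdup.
  unfold cot_defect. fold (cot (x / 2)) (cot ((x + 1) / 2)) (cot x). lra.
Qed.

Lemma continuity_pt_cot_defect c : 0 <= c <= 1 -> continuity_pt cot_defect c.
Proof.
  assert (Hc0 : continuity_pt cot_defect 0).
  { apply (continuity_pt_ext
             (minus_fct (minus_fct (fun u => PI * cos (PI * u) / sin (PI * u) - / u)
                                   (fun u => / (u - 1))) pf_tail));
      [intros u; reflexivity|].
    apply continuity_pt_minus; [apply continuity_pt_minus|].
    - apply continuity_pt_pi_cot_sub_inv.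
    - eapply is_derive_continuity_pt. auto_derive; [lra | reflexivity].
    - apply continuity_pt_pf_tail. lra. }
  intros Hc. destruct (Req_dec c 0) as [->|E0]; [exact Hc0|].
  destruct (Req_dec c 1) as [->|E1].
  - apply (continuity_pt_ext (fun y => - cot_defect (1 - y)));
      [intros y; rewrite cot_defect_reflect; ring|].
    apply (continuity_pt_opp (fun y => cot_defect (1 - y))).
    apply (continuity_pt_comp (fun y => 1 - y)); [|now rewrite Rminus_diag].
    eapply is_derive_continuity_pt. auto_derive; [exact I | reflexivity].
  - assert (Hs : 0 < sin (PI * c)) by (apply sin_gt_0; pose proof PI_RGT_0; nra).
    apply (continuity_pt_ext
             (minus_fct (fun u => PI * cos (PI * u) / sin (PI * u) - / u - / (u - 1)) pf_tail));
      [intros u; reflexivity|].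
    apply continuity_pt_minus; [|apply continuity_pt_pf_tail; lra].
    eapply is_derive_continuity_pt. auto_derive; [repeat split; lra | reflexivity].
Qed.

Lemma cot_defect_eq0 x : 0 < x < 1 -> cot_defect x = 0.
Proof.
  intros Hx. apply herglotz; [apply continuity_pt_cot_defect | apply cot_defect_0
                             | apply cot_defect_1 | apply cot_defect_duplication | lra].
Qed.

Lemma cot_partial_fractions x : 0 < x < 1 ->
  is_series (fun n => 2 * x / (INR (S n) ^ 2 - x ^ 2)) (/ x - PI * cos (PI * x) / sin (PI * x)).
Proof.
  intros Hx.
  assert (Htel : forall N, @eq R (sum_n (fun n => / (x - INR (S n)) + / (x + INR (S n))) N)
                   (/ (x - 1) + sum_n (fun n => pf_term n x) N - / (x - INR N - 2))).
  { induction N as [|N IH].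
    - rewrite !sum_O. unfold pf_term. simpl INR.
      replace (x - 0 - 2) with (x - (1 + 1)) by ring. replace (x + 0 + 1) with (x + 1) by ring.
      ring.
    - rewrite !sum_Sn_R, IH. unfold pf_term. rewrite !S_INR.
      replace (x - (INR N + 1 + 1)) with (x - INR N - 2) by ring.
      replace (x - (INR N + 1) - 2) with (x - INR N - 3) by ring.
      replace (x + (INR N + 1 + 1)) with (x + (INR N + 1) + 1) by ring.
      ring. }
  replace (/ x - PI * cos (PI * x) / sin (PI * x)) with (- (/ (x - 1) + pf_tail x))
    by (pose proof (cot_defect_eq0 x Hx) as E; unfold cot_defect in E; lra).
  apply (is_series_ext_R (fun n => - (/ (x - INR (S n)) + / (x + INR (S n))))).
  { intros n. pose proof (pos_INR n). rewrite S_INR.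
    assert (0 < (INR n + 1) ^ 2 - x ^ 2) by nra. field. repeat split; lra. }
  apply (@is_series_opp R_AbsRing R_NormedModule).
  change (is_lim_seq (sum_n (fun n => / (x - INR (S n)) + / (x + INR (S n))))
                     (/ (x - 1) + pf_tail x)).
  apply (is_lim_seq_ext _ _ _ (fun N => eq_sym (Htel N))).
  replace (Finite (/ (x - 1) + pf_tail x)) with (Finite (/ (x - 1) + pf_tail x - 0))
    by (f_equal; ring).
  apply is_lim_seq_minus'; [apply is_lim_seq_plus'; [apply is_lim_seq_const|]|].
  - apply is_series_pf_tail. lra.
  - apply (is_lim_seq_0_of_le_inv _ 1). intros N. pose proof (pos_INR N). rewrite S_INR.
    replace (/ (x - INR N - 2)) with (- (1 / (INR N + 2 - x))) by (field; lra).
    rewrite Rabs_Ropp, Rabs_pos_eq by (apply Rdiv_le_0_compat; lra).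
    unfold Rdiv. apply Rmult_le_compat_l; [lra|]. apply Rinv_le_contravar; lra.
Qed.

(** * A generating function for zeta(2k) *)

Definition zeta_even (k : nat) := zeta (INR (2 * S k)).

Lemma inv_pow_le_inv_sq m e : 1 <= m -> (2 <= e)%nat -> / m ^ e <= / m ^ 2.
Proof. intros Hm He. apply Rinv_le_contravar; [apply pow_lt; lra | now apply Rle_pow]. Qed.

Lemma is_series_zeta_even k : is_series (fun n => / INR (S n) ^ (2 * S k)) (zeta_even k).
Proof.
  unfold zeta_even, zeta.
  rewrite (Series_ext _ (fun n => / INR (S n) ^ (2 * S k)))
    by (intros n; rewrite Rpower_pow, S_INR; [reflexivity | pose proof (pos_INR n); lra]).
  apply Series_correct.
  apply (@ex_series_le R_AbsRing R_CompleteNormedModule _ (fun n => / INR (S n) ^ 2));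
    [|apply ex_series_inv_sq].
  intros n. assert (Hn : 1 <= INR (S n)) by (apply (le_INR 1); lia).
  change (norm (/ INR (S n) ^ (2 * S k))) with (Rabs (/ INR (S n) ^ (2 * S k))).
  rewrite Rabs_pos_eq by (apply Rlt_le, Rinv_0_lt_compat, pow_lt; lra).
  apply inv_pow_le_inv_sq; [exact Hn | lia].
Qed.

Lemma zeta_even_bounds k : 0 <= zeta_even k <= zeta_even 0.
Proof.
  assert (Hpos : forall n, 0 < / INR (S n) ^ (2 * S k))
    by (intros n; apply Rinv_0_lt_compat, pow_lt, lt_0_INR; lia).
  split.
  - apply Rle_trans with (/ INR (S O) ^ (2 * S k)); [apply Rlt_le, Hpos|].
    apply (term_le_is_series (fun n => / INR (S n) ^ (2 * S k))); [|apply is_series_zeta_even].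
    intros n. apply Rlt_le, Hpos.
  - rewrite <- (is_series_unique _ _ (is_series_zeta_even k)),
            <- (is_series_unique _ _ (is_series_zeta_even 0)).
    apply Series_le; [|eexists; apply is_series_zeta_even].
    intros n. split; [apply Rlt_le, Hpos|].
    apply inv_pow_le_inv_sq; [apply (le_INR 1); lia | lia].
Qed.

Lemma Rabs_zeta_even_term_le k j d y r : 0 < d -> Rabs y <= r -> r <= 1 ->
  Rabs (zeta_even k * y ^ (2 * k + j) / d) <= zeta_even 0 * r ^ k / d.
Proof.
  intros Hd Hy Hr. pose proof (zeta_even_bounds k) as Hz. pose proof (Rabs_pos y).
  unfold Rdiv. rewrite !Rabs_mult, Rabs_inv, (Rabs_pos_eq (zeta_even k)), (Rabs_pos_eq d) by lra.
  apply Rmult_le_compat_r; [apply Rlt_le, Rinv_0_lt_compat; lra|].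
  apply Rmult_le_compat; [lra | apply Rabs_pos | lra|].
  rewrite <- RPow_abs. apply Rle_trans with (r ^ (2 * k + j)); [apply pow_incr; lra|].
  replace (2 * k + j)%nat with (k + (k + j))%nat by lia. rewrite pow_add.
  rewrite <- (Rmult_1_r (r ^ k)) at 2. apply Rmult_le_compat_l; [apply pow_le; lra|].
  rewrite <- (pow1 (k + j)). apply pow_incr. lra.
Qed.

(* With [k] shifted by one, these are [T(x) = sum_{k>=1} zeta(2k) x^(2k+1) / (k (2k+1))]
   and its first two derivatives. *)
Definition zeta_T_term (k : nat) (x : R) :=
  zeta_even k * x ^ (2 * k + 3) / (INR (S k) * (2 * INR (S k) + 1)).
Definition zeta_T'_term (k : nat) (x : R) := zeta_even k * x ^ (2 * k + 2) / INR (S k).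
Definition zeta_T''_term (k : nat) (x : R) := 2 * zeta_even k * x ^ (2 * k + 1).

Definition zeta_T (x : R) := Series (fun k => zeta_T_term k x).
Definition zeta_T' (x : R) := Series (fun k => zeta_T'_term k x).
Definition zeta_T'' (x : R) := Series (fun k => zeta_T''_term k x).

Lemma is_derive_zeta_T_term k y : is_derive (zeta_T_term k) y (zeta_T'_term k y).
Proof.
  unfold zeta_T_term, zeta_T'_term. pose proof (lt_0_INR (S k) (Nat.lt_0_succ k)).
  auto_derive; [exact I|].
  change (match k with 0%nat => 1 | S _ => INR k + 1 end) with (INR (S k)).
  replace (Init.Nat.pred (k + (k + 0) + 3)) with (2 * k + 2)%nat by lia.
  replace (INR (k + (k + 0) + 3)) with (2 * INR (S k) + 1)
    by (rewrite !plus_INR, S_INR; simpl; ring).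
  field. lra.
Qed.

Lemma is_derive_zeta_T'_term k y : is_derive (zeta_T'_term k) y (zeta_T''_term k y).
Proof.
  unfold zeta_T'_term, zeta_T''_term. pose proof (lt_0_INR (S k) (Nat.lt_0_succ k)).
  auto_derive; [exact I|].
  change (match k with 0%nat => 1 | S _ => INR k + 1 end) with (INR (S k)).
  replace (Init.Nat.pred (k + (k + 0) + 2)) with (2 * k + 1)%nat by lia.
  replace (INR (k + (k + 0) + 2)) with (2 * INR (S k)) by (rewrite !plus_INR, S_INR; simpl; ring).
  field. lra.
Qed.

Lemma Rabs_zeta_T_term_le k y r : Rabs y <= r -> r <= 1 ->
  Rabs (zeta_T_term k y) <= zeta_even 0 * r ^ k.
Proof.
  intros Hy Hr. assert (1 <= INR (S k)) by (apply (le_INR 1); lia).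
  pose proof (zeta_even_bounds 0). pose proof (Rabs_pos y). unfold zeta_T_term.
  eapply Rle_trans; [apply (Rabs_zeta_even_term_le _ _ _ _ r); auto; nra|].
  apply div_le_of_ge1; [apply Rmult_le_pos; [lra | apply pow_le; lra] | nra].
Qed.

Lemma Rabs_zeta_T_term_le_inv_sq k y : Rabs y <= 1 ->
  Rabs (zeta_T_term k y) <= zeta_even 0 * / INR (S k) ^ 2.
Proof.
  intros Hy. assert (1 <= INR (S k)) by (apply (le_INR 1); lia).
  pose proof (zeta_even_bounds 0). unfold zeta_T_term.
  eapply Rle_trans; [apply (Rabs_zeta_even_term_le _ _ _ _ 1); auto; nra|].
  rewrite pow1, Rmult_1_r. unfold Rdiv. apply Rmult_le_compat_l; [lra|].
  apply Rinv_le_contravar; [apply pow_lt; lra|].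
  replace (INR (S k) ^ 2) with (INR (S k) * INR (S k)) by ring. nra.
Qed.

Lemma Rabs_zeta_T'_term_le k y r : Rabs y <= r -> r <= 1 ->
  Rabs (zeta_T'_term k y) <= zeta_even 0 * r ^ k.
Proof.
  intros Hy Hr. assert (1 <= INR (S k)) by (apply (le_INR 1); lia).
  pose proof (zeta_even_bounds 0). pose proof (Rabs_pos y). unfold zeta_T'_term.
  eapply Rle_trans; [apply (Rabs_zeta_even_term_le _ _ _ _ r); auto; lra|].
  apply div_le_of_ge1; [apply Rmult_le_pos; [lra | apply pow_le; lra] | lra].
Qed.

Lemma Rabs_zeta_T''_term_le k y r : Rabs y <= r -> r <= 1 ->
  Rabs (zeta_T''_term k y) <= 2 * zeta_even 0 * r ^ k.
Proof.
  intros Hy Hr. unfold zeta_T''_term.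
  replace (2 * zeta_even k * y ^ (2 * k + 1)) with (2 * (zeta_even k * y ^ (2 * k + 1) / 1))
    by field.
  rewrite Rabs_mult, (Rabs_pos_eq 2), Rmult_assoc by lra.
  apply Rmult_le_compat_l; [lra|].
  eapply Rle_trans; [apply (Rabs_zeta_even_term_le _ _ _ _ r); auto; lra|]. right. field.
Qed.

Lemma is_derive_zeta_T x : -1 < x < 1 -> is_derive zeta_T x (zeta_T' x).
Proof.
  apply (is_derive_Series_geom_dominated _ _ (zeta_even 0) (zeta_even 0) x is_derive_zeta_T_term).
  - intros k y. eapply is_derive_continuity_pt, is_derive_zeta_T'_term.
  - apply Rabs_zeta_T_term_le.
  - apply Rabs_zeta_T'_term_le.
Qed.

Lemma is_derive_zeta_T' x : -1 < x < 1 -> is_derive zeta_T' x (zeta_T'' x).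
Proof.
  apply (is_derive_Series_geom_dominated _ _ (zeta_even 0) (2 * zeta_even 0) x
           is_derive_zeta_T'_term).
  - intros k y. eapply is_derive_continuity_pt. unfold zeta_T''_term.
    auto_derive; [exact I | reflexivity].
  - apply Rabs_zeta_T'_term_le.
  - apply Rabs_zeta_T''_term_le.
Qed.

Lemma zeta_T_0 : zeta_T 0 = 0.
Proof.
  apply Series_zero. intros k. unfold zeta_T_term. rewrite pow_i by lia. unfold Rdiv. ring.
Qed.

Lemma zeta_T'_0 : zeta_T' 0 = 0.
Proof.
  apply Series_zero. intros k. unfold zeta_T'_term. rewrite pow_i by lia. unfold Rdiv. ring.
Qed.

Lemma is_series_odd_geom x m : 0 <= x < m ->
  is_series (fun k => 2 * x ^ (2 * k + 1) * / m ^ (2 * S k)) (2 * x / (m ^ 2 - x ^ 2)).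
Proof.
  intros Hxm. set (q := x ^ 2 / m ^ 2).
  assert (Hq : 0 <= q < 1).
  { unfold q. split; [apply Rdiv_le_0_compat; [apply pow_le | apply pow_lt]; lra|].
    apply Rmult_lt_reg_r with (m ^ 2); [apply pow_lt; lra|].
    unfold Rdiv. rewrite Rmult_assoc, Rinv_l, Rmult_1_r, Rmult_1_l by (apply pow_nonzero; lra).
    simpl. nra. }
  apply (is_series_ext_R (fun k => (2 * x / m ^ 2) * q ^ k)).
  { intros k. unfold q. unfold Rdiv. rewrite Rpow_mult_distr, pow_inv, <- !pow_mult.
    replace (2 * S k)%nat with (k * 2 + 2)%nat by lia.
    replace (2 * k)%nat with (k * 2)%nat by lia.
    rewrite !pow_add. assert (0 < m ^ (k * 2)) by (apply pow_lt; lra).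
    simpl. field. lra. }
  replace (2 * x / (m ^ 2 - x ^ 2)) with ((2 * x / m ^ 2) * / (1 - q))
    by (unfold q; assert (0 < m ^ 2 - x ^ 2) by (simpl; nra); field; split; simpl; nra).
  apply (@is_series_scal_l R_AbsRing R_NormedModule (2 * x / m ^ 2) (fun k => q ^ k)).
  apply is_series_geom. rewrite Rabs_pos_eq; lra.
Qed.

Lemma zeta_T''_eq x : 0 < x < 1 -> zeta_T'' x = / x - PI * cos (PI * x) / sin (PI * x).
Proof.
  intros Hx.
  set (a := fun k n => 2 * x ^ (2 * k + 1) * / INR (S n) ^ (2 * S k)).
  assert (Ha : forall k n, 0 <= a k n).
  { intros k n. unfold a. apply Rmult_le_pos; [apply Rmult_le_pos; [lra | apply pow_le; lra]|].
    apply Rlt_le, Rinv_0_lt_compat, pow_lt, lt_0_INR. lia. }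
  assert (Hrow : forall n, is_series (fun k => a k n) (2 * x / (INR (S n) ^ 2 - x ^ 2))).
  { intros n. apply is_series_odd_geom. assert (1 <= INR (S n)) by (apply (le_INR 1); lia). lra. }
  rewrite <- (is_series_unique _ _
               (is_series_swap_nonneg a _ _ Ha Hrow (cot_partial_fractions x Hx))).
  apply Series_ext. intros k. unfold zeta_T''_term, a.
  rewrite Series_scal_l, (is_series_unique _ _ (is_series_zeta_even k)). field.
Qed.

Lemma Rabs_ln_sinc_le t : 0 < t <= 1 -> Rabs (ln (sin t / t)) <= t ^ 2 / 5.
Proof.
  intros Ht.
  pose proof (Rabs_sin_le t ltac:(lra)) as H1. apply Rabs_le_between in H1.
  pose proof (Rabs_sin_sub_le t ltac:(lra)) as H2. apply Rabs_le_between in H2.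
  set (w := sin t / t).
  assert (Hw1 : w <= 1)
    by (unfold w; apply Rmult_le_reg_r with t; [lra|];
        unfold Rdiv; rewrite Rmult_assoc, Rinv_l; lra).
  assert (Hw2 : 1 - t ^ 2 / 6 <= w).
  { unfold w. apply Rmult_le_reg_r with t; [lra|].
    unfold Rdiv. rewrite Rmult_assoc, Rinv_l by lra. simpl in *. nra. }
  assert (Hw3 : 5 / 6 <= w) by (simpl in Hw2; nra).
  assert (L1 : ln w <= 0) by (pose proof (ln_le_sub1 w ltac:(lra)); lra).
  assert (L2 : - ln w <= t ^ 2 / 5).
  { rewrite <- ln_Rinv by lra. eapply Rle_trans; [apply ln_le_sub1, Rinv_0_lt_compat; lra|].
    apply Rle_trans with ((t ^ 2 / 6) / (5 / 6)); [|right; field].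
    replace (/ w - 1) with ((1 - w) / w) by (field; lra).
    unfold Rdiv. apply Rmult_le_compat; [lra | apply Rlt_le, Rinv_0_lt_compat; lra | lra|].
    apply Rinv_le_contravar; lra. }
  rewrite Rabs_left1 by lra. lra.
Qed.

(* Points tending to 0 along which [y ln (2 pi y)] is easy to control. *)
Definition probe (n : nat) := / (2 * PI * INR (S (S n)) ^ 2).

Lemma two_PI_probe n : 2 * PI * probe n = / INR (S (S n)) ^ 2.
Proof. unfold probe. field. split; [apply not_0_INR; lia | pose proof PI_RGT_0; lra]. Qed.

Lemma probe_bounds n : (0 < probe n < 1) /\ 2 * PI * probe n <= / INR (S n).
Proof.
  pose proof PI2_3_2. pose proof (pos_INR n).
  assert (Hle : / INR (S (S n)) ^ 2 <= / INR (S n)).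
  { rewrite !S_INR. apply Rinv_le_contravar; [lra | simpl; nra]. }
  assert (Hinv : / INR (S n) <= 1).
  { rewrite <- Rinv_1. apply Rinv_le_contravar; [lra|]. apply (le_INR 1). lia. }
  assert (Hpos : 0 < probe n).
  { unfold probe. apply Rinv_0_lt_compat, Rmult_lt_0_compat; [lra | apply pow_lt, lt_0_INR; lia]. }
  rewrite two_PI_probe. repeat split; [exact Hpos | | exact Hle].
  assert (2 * PI * probe n <= 1) by (rewrite two_PI_probe; lra). nra.
Qed.

Lemma is_lim_seq_probe : is_lim_seq probe 0.
Proof.
  apply (is_lim_seq_0_of_le_inv _ 1). intros n. destruct (probe_bounds n) as [[H0 _] H1].
  pose proof PI2_3_2. rewrite Rabs_pos_eq by lra. unfold Rdiv. rewrite Rmult_1_l. nra.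
Qed.

Lemma is_lim_seq_ln_sinc_probe :
  is_lim_seq (fun n => ln (sin (PI * probe n) / (PI * probe n))) 0.
Proof.
  apply (is_lim_seq_0_of_le_inv _ 1). intros n. pose proof PI_RGT_0.
  destruct (probe_bounds n) as [[Hp _] Hp'].
  assert (Hinv : / INR (S n) <= 1).
  { rewrite <- Rinv_1. apply Rinv_le_contravar; [lra|]. apply (le_INR 1). lia. }
  eapply Rle_trans; [apply Rabs_ln_sinc_le; nra|].
  unfold Rdiv. rewrite Rmult_1_l.
  assert (0 < PI * probe n) by nra. assert (2 * (PI * probe n) <= / INR (S n)) by lra.
  set (t := PI * probe n) in *. set (v := / INR (S n)) in *.
  replace (t ^ 2) with (t * t) by ring. nra.
Qed.

Lemma zeta_T'_eq x : 0 < x < 1 -> zeta_T' x = ln (2 * PI * x) - ln (2 * sin (PI * x)).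
Proof.
  pose proof PI_RGT_0 as HPI.
  set (f := fun y => zeta_T' y + (ln (2 * sin (PI * y)) - ln (2 * PI * y))).
  intros Hx. enough (f x = 0) by (unfold f in *; lra).
  apply (eq0_of_derive0_of_is_lim_seq f probe); [| intros n; apply probe_bounds | | exact Hx].
  - intros y Hy.
    assert (Hs : 0 < sin (PI * y)) by (apply sin_gt_0; nra).
    assert (Hlog : is_derive (fun y => ln (2 * sin (PI * y)) - ln (2 * PI * y)) y
                     (PI * cos (PI * y) / sin (PI * y) - / y))
      by (auto_derive; [repeat split; nra | field; lra]).
    assert (D : is_derive f y (zeta_T'' y + (PI * cos (PI * y) / sin (PI * y) - / y)))
      by exact (is_derive_plus _ _ _ _ _ (is_derive_zeta_T' y ltac:(lra)) Hlog).
    rewrite zeta_T''_eq in D by exact Hy.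
    replace 0 with (/ y - PI * cos (PI * y) / sin (PI * y)
                    + (PI * cos (PI * y) / sin (PI * y) - / y)) by ring.
    exact D.
  - assert (Hsinc : forall n,
               f (probe n) = zeta_T' (probe n) + ln (sin (PI * probe n) / (PI * probe n))).
    { intros n. destruct (probe_bounds n) as [[Hp Hp1] _].
      assert (0 < sin (PI * probe n)) by (apply sin_gt_0; pose proof PI2_3_2; nra).
      unfold f. rewrite ln_div, !ln_mult by nra. ring. }
    apply (is_lim_seq_ext _ _ _ (fun n => eq_sym (Hsinc n))).
    replace (Finite 0) with (Rbar_plus (zeta_T' 0) 0) by (rewrite zeta_T'_0; simpl; f_equal; ring).
    apply is_lim_seq_plus'.
    + apply (is_lim_seq_continuous zeta_T' probe 0); [|apply is_lim_seq_probe].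
      apply (is_derive_continuity_pt _ _ _ (is_derive_zeta_T' 0 ltac:(lra))).
    + apply is_lim_seq_ln_sinc_probe.
Qed.

Definition zeta_T_closed (y : R) := y * ln (2 * PI * y) - y + Cl2 (2 * PI * y) / (2 * PI).

Lemma is_derive_Cl2_scaled y : 0 < y < 1 ->
  is_derive (fun t => Cl2 (2 * PI * t)) y (2 * PI * - ln (2 * sin (PI * y))).
Proof.
  intros Hy. pose proof PI_RGT_0.
  pose proof (is_derive_Cl2 (2 * PI * y) ltac:(split; nra)) as HCl2.
  replace (2 * PI * y / 2) with (PI * y) in HCl2 by field.
  assert (Hlin : is_derive (fun t => 2 * PI * t) y (2 * PI)) by (auto_derive; [exact I | ring]).
  exact (is_derive_comp Cl2 (fun t => 2 * PI * t) y _ _ HCl2 Hlin).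
Qed.

Lemma continuity_pt_Cl2_scaled y : continuity_pt (fun t => Cl2 (2 * PI * t)) y.
Proof.
  apply (continuity_pt_comp (fun t => 2 * PI * t) Cl2); [|apply continuity_pt_Cl2].
  eapply is_derive_continuity_pt. auto_derive; [exact I | reflexivity].
Qed.

Lemma is_lim_seq_probe_mul_ln : is_lim_seq (fun n => probe n * ln (2 * PI * probe n)) 0.
Proof.
  apply (is_lim_seq_0_of_le_inv _ 1). intros n. pose proof PI2_3_2 as HPI.
  destruct (probe_bounds n) as [[Hp _] _].
  set (m := INR (S (S n))).
  assert (Hm : INR (S n) + 1 = m) by (unfold m; rewrite (S_INR (S n)); ring).
  assert (Hm1 : 1 <= INR (S n)) by (apply (le_INR 1); lia).
  rewrite two_PI_probe. fold m.
  assert (Hlog : ln (/ m ^ 2) = - (2 * ln m))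
    by (rewrite ln_Rinv, ln_pow by (try apply pow_lt; lra); simpl; ring).
  assert (Hln0 : 0 <= ln m) by (rewrite <- ln_1; apply ln_le; lra).
  assert (Hln : ln m <= m) by (pose proof (ln_le_sub1 m ltac:(lra)); lra).
  rewrite Hlog, Rabs_mult, Rabs_Ropp, (Rabs_pos_eq (probe n)), (Rabs_pos_eq (2 * ln m)) by lra.
  unfold probe. fold m.
  apply Rle_trans with (/ (2 * PI * m ^ 2) * (2 * m)).
  - apply Rmult_le_compat_l; [apply Rlt_le, Rinv_0_lt_compat; simpl; nra | lra].
  - replace (/ (2 * PI * m ^ 2) * (2 * m)) with (/ (PI * m)) by (field; lra).
    unfold Rdiv. rewrite Rmult_1_l. apply Rinv_le_contravar; [lra | nra].
Qed.

Lemma zeta_T_eq_closed_open x : 0 < x < 1 -> zeta_T x = zeta_T_closed x.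
Proof.
  pose proof PI_RGT_0 as HPI.
  set (f := fun y => zeta_T y - zeta_T_closed y).
  intros Hx. enough (f x = 0) by (unfold f in *; lra).
  apply (eq0_of_derive0_of_is_lim_seq f probe); [| intros n; apply probe_bounds | | exact Hx].
  - intros y Hy.
    assert (Hlog : is_derive (fun t => t * ln (2 * PI * t) - t) y (ln (2 * PI * y)))
      by (auto_derive; [nra | field; nra]).
    assert (D : is_derive f y (zeta_T' y - (ln (2 * PI * y)
                                            + 2 * PI * - ln (2 * sin (PI * y)) * / (2 * PI))))
      by exact (is_derive_minus _ _ _ _ _ (is_derive_zeta_T y ltac:(lra))
                  (is_derive_plus _ _ _ _ _ Hlog
                     (is_derive_scal_l _ _ _ (/ (2 * PI)) (is_derive_Cl2_scaled y Hy)))).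
    rewrite zeta_T'_eq in D by exact Hy.
    replace 0 with (ln (2 * PI * y) - ln (2 * sin (PI * y))
                    - (ln (2 * PI * y) + 2 * PI * - ln (2 * sin (PI * y)) * / (2 * PI)))
      by (field; lra).
    exact D.
  - replace (Finite 0) with (Finite (0 - (0 - 0 + 0 / (2 * PI)))) by (f_equal; field; lra).
    apply is_lim_seq_minus'.
    + rewrite <- zeta_T_0. apply (is_lim_seq_continuous zeta_T probe 0); [|apply is_lim_seq_probe].
      apply (is_derive_continuity_pt _ _ _ (is_derive_zeta_T 0 ltac:(lra))).
    + apply is_lim_seq_plus';
        [apply is_lim_seq_minus'; [apply is_lim_seq_probe_mul_ln | apply is_lim_seq_probe]|].
      apply (is_lim_seq_scal_r _ (/ (2 * PI)) 0).
      replace 0 with (Cl2 (2 * PI * 0)) by (rewrite Rmult_0_r; apply Cl2_0).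
      apply (is_lim_seq_continuous (fun t => Cl2 (2 * PI * t)) probe 0);
        [apply continuity_pt_Cl2_scaled | apply is_lim_seq_probe].
Qed.

Lemma continuity_pt_zeta_T_closed_1 : continuity_pt zeta_T_closed 1.
Proof.
  pose proof PI_RGT_0.
  apply (continuity_pt_ext (plus_fct (fun y => y * ln (2 * PI * y) - y)
                              (mult_fct (fun y => Cl2 (2 * PI * y)) (fct_cte (/ (2 * PI))))));
    [intros y; reflexivity|].
  apply continuity_pt_plus.
  - eapply is_derive_continuity_pt. auto_derive; [nra | reflexivity].
  - apply continuity_pt_mult; [apply continuity_pt_Cl2_scaled | apply continuity_pt_const].
    intros a b. reflexivity.
Qed.

Lemma zeta_T_eq_closed x : 0 < x <= 1 -> zeta_T x = zeta_T_closed x.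
Proof.
  intros Hx. destruct (Req_dec x 1) as [->|Hx1]; [|apply zeta_T_eq_closed_open; lra].
  set (y := fun n => 1 - probe n).
  assert (Hy : forall n, 0 < y n < 1)
    by (intros n; destruct (probe_bounds n) as [Hp _]; unfold y; lra).
  assert (Hlim : is_lim_seq y 1).
  { replace (Finite 1) with (Rbar_minus 1 0) by (simpl; f_equal; ring).
    apply is_lim_seq_minus'; [apply is_lim_seq_const | apply is_lim_seq_probe]. }
  assert (HT : is_lim_seq (fun n => zeta_T (y n)) (zeta_T 1)).
  { apply (is_lim_seq_Series_within zeta_T_term (fun k => zeta_even 0 * / INR (S k) ^ 2)
             (fun t => Rabs t <= 1)).
    - intros k t Ht. now apply Rabs_zeta_T_term_le_inv_sq.
    - apply (@ex_series_scal_l R_AbsRing R_NormedModule), ex_series_inv_sq.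
    - intros k. eapply is_derive_continuity_pt, is_derive_zeta_T_term.
    - rewrite Rabs_R1. lra.
    - intros n. apply Rabs_le. specialize (Hy n). lra.
    - exact Hlim. }
  assert (Hclosed : is_lim_seq (fun n => zeta_T (y n)) (zeta_T_closed 1)).
  { apply (is_lim_seq_ext (fun n => zeta_T_closed (y n))).
    - intros n. symmetry. apply zeta_T_eq_closed_open, Hy.
    - apply (is_lim_seq_continuous zeta_T_closed y 1 continuity_pt_zeta_T_closed_1 Hlim). }
  apply is_lim_seq_unique in HT. apply is_lim_seq_unique in Hclosed.
  rewrite HT in Hclosed. now injection Hclosed.
Qed.

Lemma is_series_zeta_even_pow x : 0 < Rabs x <= 1 ->
  is_series (fun k => zeta_even k * x ^ (2 * k + 2) / (INR (S k) * (2 * INR (S k) + 1)))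
    (ln (2 * PI * Rabs x) - 1 + Cl2 (2 * PI * x) / (2 * PI * x)).
Proof.
  assert (Hpos : forall y, 0 < y <= 1 ->
            is_series (fun k => zeta_even k * y ^ (2 * k + 2) / (INR (S k) * (2 * INR (S k) + 1)))
              (ln (2 * PI * y) - 1 + Cl2 (2 * PI * y) / (2 * PI * y))).
  { intros y Hy. pose proof PI_RGT_0.
    replace (ln (2 * PI * y) - 1 + Cl2 (2 * PI * y) / (2 * PI * y)) with (/ y * zeta_T y)
      by (rewrite zeta_T_eq_closed by lra; unfold zeta_T_closed; field; lra).
    apply (is_series_ext_R (fun k => / y * zeta_T_term k y)).
    - intros k. unfold zeta_T_term. replace (2 * k + 3)%nat with (S (2 * k + 2)) by lia.
      simpl pow. pose proof (lt_0_INR (S k) (Nat.lt_0_succ k)). field. split; lra.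
    - apply (@is_series_scal_l R_AbsRing R_NormedModule), Series_correct.
      apply (@ex_series_le R_AbsRing R_CompleteNormedModule _
               (fun k => zeta_even 0 * / INR (S k) ^ 2)).
      + intros k. apply Rabs_zeta_T_term_le_inv_sq. rewrite Rabs_pos_eq; lra.
      + apply (@ex_series_scal_l R_AbsRing R_NormedModule), ex_series_inv_sq. }
  intros Hx. pose proof PI_RGT_0. destruct (Rle_dec 0 x).
  - rewrite Rabs_pos_eq in * by lra. now apply Hpos.
  - rewrite Rabs_left in * by lra.
    replace (Cl2 (2 * PI * x) / (2 * PI * x)) with (Cl2 (2 * PI * - x) / (2 * PI * - x))
      by (rewrite <- Ropp_mult_distr_r, Cl2_opp; field; lra).
    apply (is_series_ext_R
             (fun k => zeta_even k * (- x) ^ (2 * k + 2) / (INR (S k) * (2 * INR (S k) + 1)))).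
    + intros k. replace (2 * k + 2)%nat with (2 * (k + 1))%nat by lia.
      rewrite !pow_mult. replace ((- x) ^ 2) with (x ^ 2) by ring. reflexivity.
    + apply Hpos. lra.
Qed.

(** * Fibonacci and Lucas numbers *)

Lemma sqrt5_sq : sqrt 5 * sqrt 5 = 5.
Proof. apply sqrt_sqrt. lra. Qed.

Lemma sqrt5_gt1 : 1 < sqrt 5.
Proof. pose proof sqrt5_sq. pose proof (sqrt_pos 5). nra. Qed.

Lemma alpha_gt1 : 1 < alpha.
Proof. pose proof sqrt5_gt1. unfold alpha. lra. Qed.

Lemma alpha_mul_beta : alpha * beta = -1.
Proof. pose proof sqrt5_sq. unfold alpha, beta. nra. Qed.

Lemma beta_eq : beta = - / alpha.
Proof.
  pose proof alpha_gt1. pose proof alpha_mul_beta.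
  apply (Rmult_eq_reg_l alpha); [|lra]. rewrite Ropp_mult_distr_r_reverse, Rinv_r; lra.
Qed.

Lemma binet n : fib n = (alpha ^ n - beta ^ n) / sqrt 5 /\ lucas n = alpha ^ n + beta ^ n.
Proof.
  pose proof sqrt5_sq. pose proof sqrt5_gt1.
  assert (Halpha : alpha ^ 2 = alpha + 1) by (unfold alpha; simpl; nra).
  assert (Hbeta : beta ^ 2 = beta + 1) by (unfold beta; simpl; nra).
  enough (Hpair : forall n,
            (fib n = (alpha ^ n - beta ^ n) / sqrt 5 /\ lucas n = alpha ^ n + beta ^ n)
                /\ (fib (S n) = (alpha ^ S n - beta ^ S n) / sqrt 5
                    /\ lucas (S n) = alpha ^ S n + beta ^ S n)) by apply Hpair.
  intros m. induction m as [|m [[F0 L0] [F1 L1]]].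
  - unfold alpha, beta. simpl. split; split; field; lra.
  - split; [split; assumption|].
    change (fib (S (S m))) with (fib (S m) + fib m).
    change (lucas (S (S m))) with (lucas (S m) + lucas m).
    rewrite F0, L0, F1, L1.
    replace (alpha ^ S (S m)) with (alpha ^ m * alpha ^ 2) by (simpl; ring).
    replace (beta ^ S (S m)) with (beta ^ m * beta ^ 2) by (simpl; ring).
    rewrite Halpha, Hbeta. simpl. split; field; lra.
Qed.

Lemma is_series_binet (c : nat -> R) (A B : R) :
  is_series (fun k => alpha ^ (2 * S k) * c k) A ->
  is_series (fun k => beta ^ (2 * S k) * c k) B ->
  is_series (fun k => fib (2 * S k) * c k) ((A - B) / sqrt 5) /\
  is_series (fun k => lucas (2 * S k) * c k) (A + B).
Proof.
  intros HA HB. pose proof sqrt5_gt1. split.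
  - apply (is_series_ext_R
             (fun k => / sqrt 5 * (alpha ^ (2 * S k) * c k + - (beta ^ (2 * S k) * c k)))).
    + intros k. rewrite (proj1 (binet _)). field. lra.
    + replace ((A - B) / sqrt 5) with (/ sqrt 5 * (A + - B)) by (field; lra).
      apply (@is_series_scal_l R_AbsRing R_NormedModule).
      apply (is_series_plus _ _ _ _ HA), (is_series_opp _ _ HB).
  - apply (is_series_ext_R (fun k => alpha ^ (2 * S k) * c k + beta ^ (2 * S k) * c k)).
    + intros k. rewrite (proj2 (binet _)). ring.
    + apply (is_series_plus _ _ _ _ HA HB).
Qed.

Lemma is_series_zeta_even_pow_mul w z : 0 < Rabs (w * z) <= 1 ->
  is_series (fun k => w ^ (2 * S k)
                      * (zeta (INR (2 * S k)) * z ^ (2 * S k) / (INR (S k) * (2 * INR (S k) + 1))))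
    (ln (2 * PI * Rabs (w * z)) - 1 + Cl2 (2 * PI * w * z) / (2 * PI * w * z)).
Proof.
  intros Hwz. rewrite !(Rmult_assoc (2 * PI)).
  refine (is_series_ext_R _ _ _ _ (is_series_zeta_even_pow _ Hwz)).
  intros k. unfold zeta_even. replace (2 * S k)%nat with (2 * k + 2)%nat by lia.
  rewrite Rpow_mult_distr. unfold Rdiv. ring.
Qed.

Lemma Rabs_golden_mul_bounds z : 0 < Rabs z <= 1 / alpha ->
  (0 < Rabs (alpha * z) <= 1) /\ (0 < Rabs (beta * z) <= 1).
Proof.
  intros Hz. pose proof alpha_gt1.
  rewrite !Rabs_mult, beta_eq, Rabs_Ropp, Rabs_inv, Rabs_pos_eq by lra.
  assert (Hmul : alpha * Rabs z <= 1).
  { apply (Rmult_le_reg_r (/ alpha)); [apply Rinv_0_lt_compat; lra|].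
    rewrite Rmult_comm, <- Rmult_assoc, Rinv_l, Rmult_1_l, Rmult_1_l by lra.
    unfold Rdiv in Hz. lra. }
  assert (0 < / alpha < 1)
    by (split; [apply Rinv_0_lt_compat | rewrite <- Rinv_1; apply Rinv_lt_contravar]; lra).
  split; split; nra.
Qed.

Lemma ln_two_PI_Rabs_mul w z : 0 < Rabs (w * z) ->
  ln (2 * PI * Rabs (w * z)) = ln (Rabs w) + ln (2 * PI * Rabs z).
Proof.
  intros Hwz. pose proof PI_RGT_0. rewrite Rabs_mult in *.
  assert (0 < Rabs w) by (destruct (Rabs_pos w) as [|E]; [lra | rewrite <- E in Hwz; lra]).
  assert (0 < Rabs z) by (destruct (Rabs_pos z) as [|E]; [lra | rewrite <- E in Hwz; lra]).
  rewrite <- ln_mult by nra. f_equal. ring.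
Qed.

Theorem theorem17 (z : R) (hz0 : 0 < Rabs z) (hz1 : Rabs z <= 1 / alpha) :
  is_series
    (fun n : nat =>
       let k := S n in
       fib (2 * k) * zeta (INR (2 * k)) * z ^ (2 * k) / (INR k * (2 * INR k + 1)))
    (2 * ln alpha / sqrt 5
     - (beta * Cl2 (2 * PI * alpha * z) - alpha * Cl2 (2 * PI * beta * z))
       / (2 * sqrt 5 * PI * z))
  /\
  is_series
    (fun n : nat =>
       let k := S n in
       lucas (2 * k) * zeta (INR (2 * k)) * z ^ (2 * k) / (INR k * (2 * INR k + 1)))
    (-2 + 2 * ln (2 * PI * Rabs z)
     - (beta * Cl2 (2 * PI * alpha * z) + alpha * Cl2 (2 * PI * beta * z))
       / (2 * PI * z)).
Proof.
  pose proof alpha_gt1. pose proof sqrt5_gt1. pose proof PI_RGT_0.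
  assert (Hz : z <> 0) by (intros ->; rewrite Rabs_R0 in hz0; lra).
  destruct (Rabs_golden_mul_bounds z (conj hz0 hz1)) as [HA HB].
  destruct (is_series_binet _ _ _ (is_series_zeta_even_pow_mul _ _ HA)
              (is_series_zeta_even_pow_mul _ _ HB)) as [HF HL].
  rewrite (ln_two_PI_Rabs_mul _ _ (proj1 HA)), (ln_two_PI_Rabs_mul _ _ (proj1 HB)),
    beta_eq, Rabs_Ropp, Rabs_inv, Rabs_pos_eq, ln_Rinv in HF, HL by lra.
  rewrite beta_eq. split.
  - refine (is_series_ext_eq_R _ _ _ _ (fun n => _) _ HF).
    + cbv zeta. unfold Rdiv. ring.
    + field. repeat split; lra.
  - refine (is_series_ext_eq_R _ _ _ _ (fun n => _) _ HL).
    + cbv zeta. unfold Rdiv. ring.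
    + field. repeat split; lra.
Qed.
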